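(* Let $\nu$ be a weight satisfying property (U), let $\mu$ be an arbitrary weight and let $g\in H(\mathbb{D})$. If $$\sup_{0\leq t<1}\ \sup_{0\leq\theta<2\pi}\mu(t)\int_0^t\frac{|g(re^{i\theta})|}{(1-r^2)\nu(r)}\,dr<+\infty\,,$$ then $S_g: H^{\infty}_\nu\rightarrow H^{\infty}_\mu$ is bounded.
   Context: $\mathbb{D}$ is the open unit disk and $H(\mathbb{D})$ the space of analytic functions on $\mathbb{D}$. A weight is a non-negative continuous function $\nu$ on $\mathbb{D}$ with $\nu(z)=\nu(|z|)$ for all $z$, which is decreasing in $|z|$; we write $\nu(r)$ for its value at $|z|=r$. For a weight $\nu$, $H^{\infty}_\nu=\{f\in H(\mathbb{D}): \sup_{z\in\mathbb{D}}\nu(z)|f(z)|<\infty\}$. A weight $\nu$ satisfies property (U) if there is $\alpha>0$ such that $r\mapsto \nu(r)/(1-r^2)^\alpha$ is almost increasing on $[0,1)$ (i.e. there is $C>0$ with $h(r)\le C h(s)$ whenever $r\le s$), equivalently $\inf_n \nu(1-2^{-(n+1)})/\nu(1-2^{-n})>0$. For $g\in H(\mathbb{D})$, $(S_gf)(z)=\int_0^z f'(\omega)g(\omega)\,d\omega$. *)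

From Stdlib Require Import Reals.
From Coquelicot Require Export Coquelicot.

Open Scope R_scope.

Definition in_disk (z : C) : Prop := Cmod z < 1.

Definition holomorphic_on_disk (f : C -> C) : Prop :=
  forall z : C, in_disk z -> ex_derive (K := C_AbsRing) f z.

(* A weight, given by its radial profile r |-> nu(r) on [0,1):
   non-negative, continuous on [0,1) (equivalently z |-> nu(|z|) continuous on D),
   and decreasing (non-increasing) in r. *)
Definition weight (nu : R -> R) : Prop :=
  (forall r, 0 <= r < 1 -> 0 <= nu r) /\
  (forall r, 0 <= r < 1 ->
     filterlim nu (within (fun x => 0 <= x < 1) (locally r)) (locally (nu r))) /\
  (forall r s, 0 <= r -> r <= s -> s < 1 -> nu s <= nu r).

Definition almost_increasing (h : R -> R) : Prop :=
  exists Cst : R, 0 < Cst /\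
    forall r s, 0 <= r -> r <= s -> s < 1 -> h r <= Cst * h s.

Definition property_U (nu : R -> R) : Prop :=
  exists alpha : R, 0 < alpha /\
    almost_increasing (fun r => nu r / Rpower (1 - r ^ 2) alpha).

(* S_g f (z) = int_0^z f'(w) g(w) dw, the integral along the segment [0,z],
   parametrised as w = t z, t in [0,1]; fp is the complex derivative of f. *)
Definition Sg (g fp : C -> C) (z : C) : C :=
  RInt (V := C_R_CompleteNormedModule)
       (fun t : R => (fp (RtoC t * z) * g (RtoC t * z) * z)%C) 0 1.

(* Cauchy's estimate on a square of side comparable to [1 - |w|] shows that
   [nu(|z|) |f(z)| <= M] forces [|f'(w)| <= C M / ((1 - |w|^2) nu((1 + |w|) / 2))], and property (U)
   gives [nu(|w|) <= D nu((1 + |w|) / 2)].  Integrating [|f' g|] along the radius to [z] then bounds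
   [mu(|z|) |S_g f(z)|] by [C D M] times the quantity assumed bounded.  Holomorphy of [S_g f]: [f'] is
   holomorphic (differentiate Cauchy's formula on squares, itself a consequence of Goursat's theorem
   on rectangles), so [f' g] has a primitive on the disk, and [S_g f] is that primitive minus its
   value at [0]. *)

From Stdlib Require Import Reals Lra Psatz.
From Coquelicot Require Import Coquelicot.
Open Scope R_scope.

Notation is_C_derive f z l := (is_derive (K := C_AbsRing) (V := C_NormedModule) f z l).
Notation ex_C_derive f z := (ex_derive (K := C_AbsRing) (V := C_NormedModule) f z).
Notation CRInt f a b := (RInt (V := C_R_CompleteNormedModule) f a b).
Notation ex_CRInt f a b := (ex_RInt (V := C_R_NormedModule) f a b).

(** * Complex continuity and differentiability *)

Lemma norm_C_R (x : C) : @norm _ C_R_NormedModule x = Cmod x.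
Proof. symmetry. apply Cmod_norm. Qed.

Lemma scal_C_R (x : R) (y : C) : @scal _ C_R_NormedModule x y = (RtoC x * y)%C.
Proof.
  destruct y as [a b]. unfold scal; simpl. unfold prod_scal; simpl.
  unfold Cmult, RtoC; simpl. f_equal; unfold scal; simpl; unfold mult; simpl; ring.
Qed.

Lemma Cmod_sub_le (a b : C) : Cmod (a - b) <= Cmod a + Cmod b.
Proof. unfold Cminus. rewrite <- (Cmod_opp b). apply Cmod_triangle. Qed.

Lemma Cmod_sub_ge (a b : C) : Cmod a - Cmod b <= Cmod (a - b).
Proof.
  pose proof (Cmod_triangle (a - b) b) as H. replace (a - b + b)%C with a in H by ring. lra.
Qed.

Lemma Cmod_sub_sym (a b : C) : Cmod (a - b) = Cmod (b - a).
Proof. replace (a - b)%C with (- (b - a))%C by ring. apply Cmod_opp. Qed.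

Lemma Cmod_sub_triangle (a b c : C) : Cmod (a - c) <= Cmod (a - b) + Cmod (b - c).
Proof. replace (a - c)%C with ((a - b) + (b - c))%C by ring. apply Cmod_triangle. Qed.

Lemma Cmod_le_add_sub (a b : C) : Cmod a <= Cmod b + Cmod (a - b).
Proof. replace a with (b + (a - b))%C at 1 by ring. apply Cmod_triangle. Qed.

Lemma Cmod_pair_le (a b : R) : Cmod (a, b) <= Rabs a + Rabs b.
Proof.
  unfold Cmod; simpl. pose proof (Rabs_pos a); pose proof (Rabs_pos b).
  rewrite <- (sqrt_pow2 (Rabs a + Rabs b)) by lra.
  apply sqrt_le_1_alt. rewrite <- (pow2_abs a) at 1. rewrite <- (pow2_abs b) at 1. nra.
Qed.

Lemma Cmod_sub_pair_le (x y x' y' : R) : Cmod ((x, y) - (x', y'))%C <= Rabs (x - x') + Rabs (y - y').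
Proof. apply Cmod_pair_le. Qed.

Lemma Cmod_Ci_mult (v : C) : Cmod (Ci * v) = Cmod v.
Proof.
  rewrite Cmod_mult. replace (Cmod Ci) with 1; [ring|].
  unfold Cmod, Ci; simpl. rewrite <- sqrt_1 at 1. f_equal. ring.
Qed.

Lemma Cmod_pos_neq0 (u : C) : 0 < Cmod u -> u <> 0%C.
Proof. intros h E. rewrite E, Cmod_0 in h. lra. Qed.

Lemma Cmod_polar (c t : R) : Cmod (c * cos t, c * sin t) = Rabs c.
Proof.
  unfold Cmod; cbn [fst snd]. rewrite <- sqrt_Rsqr_abs. f_equal. unfold Rsqr.
  pose proof (sin2_cos2 t) as E. unfold Rsqr in E.
  replace ((c * cos t) ^ 2 + (c * sin t) ^ 2) with (c * c * (sin t * sin t + cos t * cos t)) by ring.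
  rewrite E. ring.
Qed.

(* Coquelicot's [C_UniformSpace] carries the product uniformity, which does not mix well
   with [Cmod] estimates. *)
Definition Ccont (F : C -> C) (z : C) : Prop :=
  forall eps, 0 < eps -> exists d, 0 < d /\
    forall w, Cmod (w - z) < d -> Cmod (F w - F z) < eps.

Lemma Ccont_const (c z : C) : Ccont (fun _ => c) z.
Proof.
  intros eps Heps. exists 1. split; [lra|]. intros w _.
  replace (c - c)%C with (RtoC 0) by ring. rewrite Cmod_0. lra.
Qed.

Lemma Ccont_minus F G z : Ccont F z -> Ccont G z -> Ccont (fun w => F w - G w)%C z.
Proof.
  intros hF hG eps Heps.
  destruct (hF (eps / 2)) as [d1 [h1 k1]]; [lra|].
  destruct (hG (eps / 2)) as [d2 [h2 k2]]; [lra|].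
  exists (Rmin d1 d2). split; [apply Rmin_pos; auto|].
  intros w Hw. pose proof (Rmin_l d1 d2). pose proof (Rmin_r d1 d2).
  replace (F w - G w - (F z - G z))%C with ((F w - F z) - (G w - G z))%C by ring.
  eapply Rle_lt_trans; [apply Cmod_sub_le|].
  specialize (k1 w ltac:(lra)). specialize (k2 w ltac:(lra)). lra.
Qed.

Lemma Ccont_plus F G z : Ccont F z -> Ccont G z -> Ccont (fun w => F w + G w)%C z.
Proof.
  intros hF hG eps Heps.
  destruct (hF (eps / 2)) as [d1 [h1 k1]]; [lra|].
  destruct (hG (eps / 2)) as [d2 [h2 k2]]; [lra|].
  exists (Rmin d1 d2). split; [apply Rmin_pos; auto|].
  intros w Hw. pose proof (Rmin_l d1 d2). pose proof (Rmin_r d1 d2).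
  replace (F w + G w - (F z + G z))%C with ((F w - F z) + (G w - G z))%C by ring.
  eapply Rle_lt_trans; [apply Cmod_triangle|].
  specialize (k1 w ltac:(lra)). specialize (k2 w ltac:(lra)). lra.
Qed.

Lemma Ccont_mult F G z : Ccont F z -> Ccont G z -> Ccont (fun w => F w * G w)%C z.
Proof.
  intros hF hG eps Heps.
  set (A := Cmod (F z) + 1). set (B := Cmod (G z) + 1).
  pose proof (Cmod_ge_0 (F z)). pose proof (Cmod_ge_0 (G z)).
  set (e := Rmin 1 (eps / (A + B + 1))).
  assert (he : 0 < e) by (apply Rmin_pos; [lra | apply Rdiv_lt_0_compat; unfold A, B; lra]).
  assert (e1 : e <= 1) by apply Rmin_l.
  assert (e2 : e * (A + B + 1) <= eps).
  { pose proof (Rmin_r 1 (eps / (A + B + 1))) as h. fold e in h.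
    apply (Rmult_le_compat_r (A + B + 1)) in h; [|unfold A, B; lra].
    unfold Rdiv in h. rewrite Rmult_assoc, Rinv_l in h by (unfold A, B; lra). lra. }
  destruct (hF e he) as [d1 [h1 k1]]. destruct (hG e he) as [d2 [h2 k2]].
  exists (Rmin d1 d2). split; [apply Rmin_pos; auto|].
  intros w Hw. pose proof (Rmin_l d1 d2). pose proof (Rmin_r d1 d2).
  specialize (k1 w ltac:(lra)). specialize (k2 w ltac:(lra)).
  replace (F w * G w - F z * G z)%C with ((F w - F z) * G w + F z * (G w - G z))%C by ring.
  eapply Rle_lt_trans; [apply Cmod_triangle|]. rewrite !Cmod_mult.
  assert (Cmod (G w) <= B) by (pose proof (Cmod_le_add_sub (G w) (G z)); unfold B; lra).
  pose proof (Cmod_ge_0 (F w - F z)). pose proof (Cmod_ge_0 (G w - G z)). pose proof (Cmod_ge_0 (G w)).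
  assert (Cmod (F w - F z) * Cmod (G w) <= e * B) by nra.
  assert (Cmod (F z) * Cmod (G w - G z) <= A * e) by (unfold A; nra).
  unfold A, B in *. nra.
Qed.

Lemma Ccont_scal (G : C -> C) c z : Ccont G z -> Ccont (fun w => c * G w)%C z.
Proof. intros H. apply (Ccont_mult (fun _ => c)); [apply Ccont_const | exact H]. Qed.

Lemma is_C_derive_approx (P : C -> C) z l : is_C_derive P z l ->
  forall eps, 0 < eps -> exists d, 0 < d /\ forall w, Cmod (w - z) < d ->
    Cmod (P w - P z - l * (w - z)) <= eps * Cmod (w - z).
Proof.
  intros [_ H] eps Heps.
  specialize (H z (fun P H => H) (mkposreal eps Heps)).
  apply (locally_le_locally_norm (K := C_AbsRing) (V := AbsRing_NormedModule C_AbsRing)) in H.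
  destruct H as [d Hd]. exists d. split; [apply cond_pos|]. intros w Hw.
  specialize (Hd w Hw). simpl in Hd.
  replace (l * (w - z))%C with ((w - z) * l)%C by ring. exact Hd.
Qed.

Lemma is_C_derive_intro (P : C -> C) z l :
  (forall eps, 0 < eps -> exists d, 0 < d /\ forall w, Cmod (w - z) < d ->
    Cmod (P w - P z - l * (w - z)) <= eps * Cmod (w - z)) ->
  is_C_derive P z l.
Proof.
  intros H. split; [apply is_linear_scal_l|].
  intros x Hx.
  apply (is_filter_lim_locally_unique (K := C_AbsRing) (V := AbsRing_NormedModule C_AbsRing)) in Hx.
  subst x. intros eps. destruct (H eps (cond_pos eps)) as [d [Hd Hw]].
  apply (locally_norm_le_locally (K := C_AbsRing) (V := AbsRing_NormedModule C_AbsRing)).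
  exists (mkposreal d Hd). intros w Hb. specialize (Hw w Hb).
  change (Cmod (P w - P z - (w - z) * l) <= eps * Cmod (w - z)).
  replace ((w - z) * l)%C with (l * (w - z))%C by ring. exact Hw.
Qed.

Lemma is_derive_R_C_intro (P : R -> C) t l :
  (forall eps, 0 < eps -> exists d, 0 < d /\ forall s, Rabs (s - t) < d ->
    Cmod (P s - P t - RtoC (s - t) * l) <= eps * Rabs (s - t)) ->
  is_derive (K := R_AbsRing) (V := C_R_NormedModule) P t l.
Proof.
  intros H. split; [apply is_linear_scal_l|].
  intros x Hx.
  apply (is_filter_lim_locally_unique (K := R_AbsRing) (V := AbsRing_NormedModule R_AbsRing)) in Hx.
  subst x. intros eps. destruct (H eps (cond_pos eps)) as [d [Hd Hw]].
  apply (locally_norm_le_locally (K := R_AbsRing) (V := AbsRing_NormedModule R_AbsRing)).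
  exists (mkposreal d Hd). intros w Hb. specialize (Hw w Hb). rewrite norm_C_R, scal_C_R. exact Hw.
Qed.

Lemma is_C_derive_Ccont P z l : is_C_derive P z l -> Ccont P z.
Proof.
  intros H eps Heps.
  destruct (is_C_derive_approx P z l H 1 Rlt_0_1) as [d [Hd Hw]].
  pose proof (Cmod_ge_0 l).
  exists (Rmin d (eps / (Cmod l + 2))). split.
  { apply Rmin_pos; auto. apply Rdiv_lt_0_compat; lra. }
  intros w Hw'. pose proof (Rmin_l d (eps / (Cmod l + 2))). pose proof (Rmin_r d (eps / (Cmod l + 2))).
  specialize (Hw w ltac:(lra)).
  assert (Cmod (w - z) * (Cmod l + 2) < eps).
  { apply Rmult_lt_reg_r with (/ (Cmod l + 2)); [apply Rinv_0_lt_compat; lra|].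
    rewrite Rmult_assoc, Rinv_r, Rmult_1_r by lra. lra. }
  replace (P w - P z)%C with ((P w - P z - l * (w - z)) + l * (w - z))%C by ring.
  eapply Rle_lt_trans; [apply Cmod_triangle|]. rewrite Cmod_mult.
  pose proof (Cmod_ge_0 (w - z)). nra.
Qed.

Lemma ex_C_derive_Ccont P z : ex_C_derive P z -> Ccont P z.
Proof. intros [l H]. exact (is_C_derive_Ccont P z l H). Qed.

(* Coquelicot states [is_derive_mult] and [is_derive_id] in [AbsRing_NormedModule C_AbsRing]. *)
Lemma is_C_derive_abs f z l :
  is_C_derive f z l <-> is_derive (K := C_AbsRing) (V := AbsRing_NormedModule C_AbsRing) f z l.
Proof. split; intros [_ H]; split; [apply is_linear_scal_l | exact H | apply is_linear_scal_l | exact H]. Qed.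

Lemma is_C_derive_mult (F G : C -> C) (z dF dG : C) :
  is_C_derive F z dF -> is_C_derive G z dG ->
  is_C_derive (fun w => F w * G w)%C z (dF * G z + F z * dG)%C.
Proof.
  intros H1 H2. apply is_C_derive_abs.
  apply is_C_derive_abs in H1. apply is_C_derive_abs in H2.
  exact (is_derive_mult F G z dF dG H1 H2 Cmult_comm).
Qed.

Lemma is_C_derive_const (c z : C) : is_C_derive (fun _ => c) z (RtoC 0).
Proof. exact (is_derive_const c z). Qed.

Lemma is_C_derive_id (z : C) : is_C_derive (fun w => w) z (RtoC 1).
Proof. apply is_C_derive_abs. exact (is_derive_id (K := C_AbsRing) z). Qed.

Lemma is_C_derive_minus (F G : C -> C) (z dF dG : C) :
  is_C_derive F z dF -> is_C_derive G z dG -> is_C_derive (fun w => F w - G w)%C z (dF - dG)%C.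
Proof.
  exact (is_derive_minus F G z dF dG).
Qed.

Lemma is_C_derive_plus (F G : C -> C) (z dF dG : C) :
  is_C_derive F z dF -> is_C_derive G z dG -> is_C_derive (fun w => F w + G w)%C z (dF + dG)%C.
Proof. exact (is_derive_plus F G z dF dG). Qed.

Lemma is_C_derive_mult_r (F : C -> C) (z l c : C) :
  is_C_derive F z l -> is_C_derive (fun w => F w * c)%C z (l * c)%C.
Proof.
  intros H. replace (l * c)%C with (l * c + F z * RtoC 0)%C by ring.
  exact (is_C_derive_mult F (fun _ => c) z l (RtoC 0) H (is_C_derive_const c z)).
Qed.

Lemma is_C_derive_sub_const (F : C -> C) (z l c : C) :
  is_C_derive F z l -> is_C_derive (fun w => F w - c)%C z l.
Proof.
  intros H. replace l with (l - RtoC 0)%C by ring.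
  exact (is_C_derive_minus F (fun _ => c) z l (RtoC 0) H (is_C_derive_const c z)).
Qed.

Lemma is_C_derive_affine (a b z : C) : is_C_derive (fun w => a + b * w)%C z b.
Proof.
  pose proof (is_C_derive_plus _ _ z _ _ (is_C_derive_const a z)
    (is_C_derive_mult _ _ z _ _ (is_C_derive_const b z) (is_C_derive_id z))) as H.
  cbv beta in H. replace (RtoC 0 + (RtoC 0 * z + b * RtoC 1))%C with b in H by ring. exact H.
Qed.

Lemma is_C_derive_inv_shift (z0 w0 : C) : w0 <> z0 ->
  is_C_derive (fun w => / (w - z0))%C w0 (- (/ ((w0 - z0) * (w0 - z0))))%C.
Proof.
  intros hne. set (u := (w0 - z0)%C).
  assert (hu : u <> 0%C) by (intros E; apply hne, Ceq_minus, E).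
  assert (mu : 0 < Cmod u) by (apply Cmod_gt_0; auto).
  apply is_C_derive_intro. intros eps Heps.
  exists (Rmin (Cmod u / 2) (eps * (Cmod u * Cmod u * Cmod u) / 2)). split.
  { apply Rmin_pos; [lra|]. apply Rdiv_lt_0_compat; [|lra].
    apply Rmult_lt_0_compat; [auto|]. apply Rmult_lt_0_compat; [apply Rmult_lt_0_compat|]; auto. }
  intros w Hw. set (h := (w - w0)%C) in *.
  pose proof (Rmin_l (Cmod u / 2) (eps * (Cmod u * Cmod u * Cmod u) / 2)).
  pose proof (Rmin_r (Cmod u / 2) (eps * (Cmod u * Cmod u * Cmod u) / 2)).
  replace (w - z0)%C with (u + h)%C by (unfold u, h; ring).
  pose proof (Cmod_sub_ge u (- h)) as Hl. rewrite Cmod_opp in Hl.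
  replace (u - - h)%C with (u + h)%C in Hl by ring.
  assert (huh : (u + h)%C <> 0%C) by (apply Cmod_pos_neq0; lra).
  change (w0 - z0)%C with u.
  replace (/ (u + h) - / u - - / (u * u) * h)%C with (h * h * / ((u + h) * (u * u)))%C by (field; auto).
  rewrite !Cmod_mult, Cmod_inv by (apply Cmult_neq_0; auto; apply Cmult_neq_0; auto).
  rewrite !Cmod_mult. pose proof (Cmod_ge_0 h).
  assert (P : 0 < Cmod (u + h) * (Cmod u * Cmod u)) by (apply Rmult_lt_0_compat; nra).
  apply Rmult_le_reg_r with (Cmod (u + h) * (Cmod u * Cmod u)); auto.
  rewrite Rmult_assoc, Rinv_l, Rmult_1_r by lra.
  assert (eps * (Cmod u * Cmod u * Cmod u) / 2 <= eps * (Cmod (u + h) * (Cmod u * Cmod u))).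
  { assert (0 <= eps * (Cmod u * Cmod u)) by nra. nra. }
  nra.
Qed.

Lemma Ccont_inv_shift (z0 w0 : C) : w0 <> z0 -> Ccont (fun w => / (w - z0))%C w0.
Proof. intros h. eapply is_C_derive_Ccont, is_C_derive_inv_shift, h. Qed.

Lemma continuous_line (F : C -> C) (a b : C) t0 :
  Ccont F (a + RtoC t0 * b)%C ->
  continuous (T := R_UniformSpace) (U := C_R_CompleteNormedModule) (fun t => F (a + RtoC t * b)%C) t0.
Proof.
  intros H. apply filterlim_locally. intros eps.
  pose proof (Cmod_ge_0 b).
  destruct (H eps (cond_pos eps)) as [d [Hd Hw]].
  assert (hd : 0 < d / (Cmod b + 1)) by (apply Rdiv_lt_0_compat; lra).
  exists (mkposreal _ hd). intros s Hs. apply (norm_compat1 (V := C_R_NormedModule)).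
  rewrite norm_C_R. apply Hw.
  replace (a + RtoC s * b - (a + RtoC t0 * b))%C with (RtoC (s - t0) * b)%C
    by (rewrite RtoC_minus; ring).
  rewrite Cmod_mult, Cmod_R. change (Rabs (s - t0) < d / (Cmod b + 1)) in Hs.
  pose proof (Rabs_pos (s - t0)).
  assert (Rabs (s - t0) * (Cmod b + 1) < d).
  { apply Rmult_lt_reg_r with (/ (Cmod b + 1)); [apply Rinv_0_lt_compat; lra|].
    rewrite Rmult_assoc, Rinv_r, Rmult_1_r by lra. exact Hs. }
  nra.
Qed.

Lemma is_derive_line (P : C -> C) a b t0 l :
  is_C_derive P (a + RtoC t0 * b)%C l ->
  is_derive (K := R_AbsRing) (V := C_R_NormedModule) (fun t => P (a + RtoC t * b)%C) t0 (l * b)%C.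
Proof.
  intros H. apply is_derive_R_C_intro. intros eps Heps. pose proof (Cmod_ge_0 b).
  destruct (is_C_derive_approx P _ l H (eps / (Cmod b + 1))) as [d [Hd Hw]].
  { apply Rdiv_lt_0_compat; lra. }
  exists (d / (Cmod b + 1)). split; [apply Rdiv_lt_0_compat; lra|].
  intros s Hs.
  assert (E : (a + RtoC s * b - (a + RtoC t0 * b))%C = (RtoC (s - t0) * b)%C)
    by (rewrite RtoC_minus; ring).
  assert (Hm : Cmod (RtoC (s - t0) * b) = Rabs (s - t0) * Cmod b) by (rewrite Cmod_mult, Cmod_R; reflexivity).
  assert (h1 : Rabs (s - t0) * (Cmod b + 1) < d).
  { apply Rmult_lt_reg_r with (/ (Cmod b + 1)); [apply Rinv_0_lt_compat; lra|].
    rewrite Rmult_assoc, Rinv_r, Rmult_1_r by lra. exact Hs. }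
  pose proof (Rabs_pos (s - t0)).
  specialize (Hw (a + RtoC s * b)%C ltac:(rewrite E, Hm; nra)). rewrite E in Hw.
  replace (RtoC (s - t0) * (l * b))%C with (l * (RtoC (s - t0) * b))%C by ring.
  eapply Rle_trans; [apply Hw|]. rewrite Hm.
  replace (eps / (Cmod b + 1) * (Rabs (s - t0) * Cmod b))
    with (eps * Rabs (s - t0) * (Cmod b / (Cmod b + 1))) by (field; lra).
  assert (Cmod b / (Cmod b + 1) <= 1).
  { apply Rmult_le_reg_r with (Cmod b + 1); [lra|].
    unfold Rdiv. rewrite Rmult_assoc, Rinv_l by lra. lra. }
  assert (0 <= eps * Rabs (s - t0)) by nra. nra.
Qed.

(** * Integrals along the boundary of a rectangle *)

Lemma Rmin_Rmax_le a b : a <= b -> Rmin a b = a /\ Rmax a b = b.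
Proof. intros; split; [apply Rmin_left | apply Rmax_right]; lra. Qed.

Lemma is_RInt_C_scal (f : R -> C) a b (l c : C) :
  is_RInt (V := C_R_NormedModule) f a b l ->
  is_RInt (V := C_R_NormedModule) (fun t => c * f t)%C a b (c * l)%C.
Proof.
  intros H.
  pose proof (is_RInt_fct_extend_fst (U := R_NormedModule) (V := R_NormedModule) f a b l H) as H1.
  pose proof (is_RInt_fct_extend_snd (U := R_NormedModule) (V := R_NormedModule) f a b l H) as H2.
  destruct c as [c1 c2], l as [l1 l2]. simpl in H1, H2.
  apply (is_RInt_fct_extend_pair (U := R_NormedModule) (V := R_NormedModule)); simpl.
  - apply is_RInt_ext with (fun t => minus (scal c1 (fst (f t))) (scal c2 (snd (f t)))); [reflexivity|].
    replace (c1 * l1 - c2 * l2) with (minus (scal c1 l1) (scal c2 l2))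
      by (unfold minus, plus, opp, scal; simpl; unfold mult; simpl; ring).
    apply (is_RInt_minus (V := R_NormedModule)); apply (is_RInt_scal (V := R_NormedModule)); assumption.
  - apply is_RInt_ext with (fun t => plus (scal c1 (snd (f t))) (scal c2 (fst (f t)))).
    { intros. unfold plus, scal; simpl. unfold mult; simpl. ring. }
    replace (c1 * l2 + c2 * l1) with (plus (scal c1 l2) (scal c2 l1))
      by (unfold plus, scal; simpl; unfold mult; simpl; ring).
    apply (is_RInt_plus (V := R_NormedModule)); apply (is_RInt_scal (V := R_NormedModule)); assumption.
Qed.

Lemma RInt_C_scal (f : R -> C) a b (c : C) :
  ex_CRInt f a b -> CRInt (fun t => c * f t)%C a b = (c * CRInt f a b)%C.
Proof.
  intros H. apply is_RInt_unique, is_RInt_C_scal.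
  exact (RInt_correct (V := C_R_CompleteNormedModule) f a b H).
Qed.

Lemma RInt_C_minus (f g : R -> C) a b : ex_CRInt f a b -> ex_CRInt g a b ->
  CRInt (fun t => f t - g t)%C a b = (CRInt f a b - CRInt g a b)%C.
Proof. exact (RInt_minus (V := C_R_CompleteNormedModule) f g a b). Qed.

Lemma RInt_C_Chasles (f : R -> C) a b c : ex_CRInt f a b -> ex_CRInt f b c ->
  CRInt f a c = (CRInt f a b + CRInt f b c)%C.
Proof. intros H1 H2. symmetry. exact (RInt_Chasles (V := C_R_CompleteNormedModule) f a b c H1 H2). Qed.

Lemma RInt_C_swap (f : R -> C) a b : ex_CRInt f a b -> CRInt f b a = (- CRInt f a b)%C.
Proof. intros H. symmetry. exact (opp_RInt_swap (V := C_R_CompleteNormedModule) f a b H). Qed.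

Lemma RInt_C_const (c : C) a b : CRInt (fun _ => c) a b = (RtoC (b - a) * c)%C.
Proof. rewrite (RInt_const (V := C_R_CompleteNormedModule)). apply scal_C_R. Qed.

Lemma Cmod_RInt_le_const (f : R -> C) a b B : a <= b -> ex_CRInt f a b ->
  (forall t, a <= t <= b -> Cmod (f t) <= B) -> Cmod (CRInt f a b) <= (b - a) * B.
Proof.
  intros Hab Hf HB. rewrite <- norm_C_R.
  apply (norm_RInt_le_const (V := C_R_NormedModule) f a b); [exact Hab | |].
  - intros t Ht. rewrite norm_C_R. auto.
  - exact (RInt_correct (V := C_R_CompleteNormedModule) f a b Hf).
Qed.

Lemma Cmod_RInt_le_const_abs (f : R -> C) a b B : ex_CRInt f a b ->
  (forall t, Rmin a b <= t <= Rmax a b -> Cmod (f t) <= B) ->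
  Cmod (CRInt f a b) <= Rabs (b - a) * B.
Proof.
  intros Hf HB. destruct (Rle_or_lt a b) as [h|h].
  - destruct (Rmin_Rmax_le _ _ h) as [e1 e2]. rewrite Rabs_right by lra.
    apply Cmod_RInt_le_const; auto. intros t Ht; apply HB; lra.
  - rewrite Rmin_right, Rmax_left in HB by lra.
    rewrite RInt_C_swap, Cmod_opp by exact (ex_RInt_swap (V := C_R_NormedModule) _ _ _ Hf).
    rewrite Rabs_left, Ropp_minus_distr by lra.
    apply Cmod_RInt_le_const; auto; [lra|]. exact (ex_RInt_swap (V := C_R_NormedModule) _ _ _ Hf).
Qed.

Lemma ex_RInt_line (F : C -> C) (a b : C) t1 t2 :
  (forall t, Rmin t1 t2 <= t <= Rmax t1 t2 -> Ccont F (a + RtoC t * b)%C) ->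
  ex_CRInt (fun t => F (a + RtoC t * b)%C) t1 t2.
Proof.
  intros H. apply (ex_RInt_continuous (V := C_R_CompleteNormedModule)).
  intros t Ht. apply continuous_line. auto.
Qed.

Definition hseg_int (F : C -> C) (y a b : R) : C := CRInt (fun t => F (t, y)) a b.
Definition vseg_int (F : C -> C) (x a b : R) : C := CRInt (fun t => F (x, t)) a b.

(* The integral of [F] along the positively oriented boundary of [[x1,x2] x [y1,y2]];
   on the vertical sides [dz = i dt]. *)
Definition rect_int (F : C -> C) (x1 x2 y1 y2 : R) : C :=
  (hseg_int F y1 x1 x2 + Ci * vseg_int F x2 y1 y2
   - hseg_int F y2 x1 x2 - Ci * vseg_int F x1 y1 y2)%C.

Definition Ccont_on_rect (F : C -> C) x1 x2 y1 y2 : Prop :=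
  forall x y, x1 <= x <= x2 -> y1 <= y <= y2 -> Ccont F (x, y).

Definition Ccont_on_boundary (F : C -> C) x1 x2 y1 y2 : Prop :=
  (forall t, x1 <= t <= x2 -> Ccont F (t, y1) /\ Ccont F (t, y2)) /\
  (forall t, y1 <= t <= y2 -> Ccont F (x1, t) /\ Ccont F (x2, t)).

Lemma Ccont_on_rect_boundary F x1 x2 y1 y2 : x1 <= x2 -> y1 <= y2 ->
  Ccont_on_rect F x1 x2 y1 y2 -> Ccont_on_boundary F x1 x2 y1 y2.
Proof. intros h1 h2 H. split; intros t Ht; split; apply H; lra. Qed.

Lemma Ccont_on_rect_sub F x1 x2 y1 y2 a1 a2 b1 b2 :
  x1 <= a1 -> a2 <= x2 -> y1 <= b1 -> b2 <= y2 ->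
  Ccont_on_rect F x1 x2 y1 y2 -> Ccont_on_rect F a1 a2 b1 b2.
Proof. intros h1 h2 h3 h4 H x y Hx Hy. apply H; lra. Qed.

Lemma Ccont_on_boundary_minus F G x1 x2 y1 y2 :
  Ccont_on_boundary F x1 x2 y1 y2 -> Ccont_on_boundary G x1 x2 y1 y2 ->
  Ccont_on_boundary (fun w => F w - G w)%C x1 x2 y1 y2.
Proof.
  intros [a b] [c d]. split; intros t Ht.
  - destruct (a t Ht), (c t Ht). split; apply Ccont_minus; auto.
  - destruct (b t Ht), (d t Ht). split; apply Ccont_minus; auto.
Qed.

Lemma ex_RInt_hseg F y a b : (forall t, Rmin a b <= t <= Rmax a b -> Ccont F (t, y)) ->
  ex_CRInt (fun t => F (t, y)) a b.
Proof.
  intros H. apply (ex_RInt_ext (V := C_R_NormedModule) (fun t => F ((0, y) + RtoC t * (1, 0))%C)).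
  - intros t _. f_equal. unfold Cplus, Cmult, RtoC; simpl; f_equal; ring.
  - apply ex_RInt_line. intros t Ht. replace ((0, y) + RtoC t * (1, 0))%C with ((t, y) : C); auto.
    unfold Cplus, Cmult, RtoC; simpl; f_equal; ring.
Qed.

Lemma ex_RInt_vseg F x a b : (forall t, Rmin a b <= t <= Rmax a b -> Ccont F (x, t)) ->
  ex_CRInt (fun t => F (x, t)) a b.
Proof.
  intros H. apply (ex_RInt_ext (V := C_R_NormedModule) (fun t => F ((x, 0) + RtoC t * (0, 1))%C)).
  - intros t _. f_equal. unfold Cplus, Cmult, RtoC; simpl; f_equal; ring.
  - apply ex_RInt_line. intros t Ht. replace ((x, 0) + RtoC t * (0, 1))%C with ((x, t) : C); auto.
    unfold Cplus, Cmult, RtoC; simpl; f_equal; ring.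
Qed.

Lemma ex_RInt_boundary F x1 x2 y1 y2 : x1 <= x2 -> y1 <= y2 ->
  Ccont_on_boundary F x1 x2 y1 y2 ->
  ex_CRInt (fun t => F (t, y1)) x1 x2 /\ ex_CRInt (fun t => F (t, y2)) x1 x2 /\
  ex_CRInt (fun t => F (x1, t)) y1 y2 /\ ex_CRInt (fun t => F (x2, t)) y1 y2.
Proof.
  intros h1 h2 [Hh Hv]. destruct (Rmin_Rmax_le _ _ h1) as [e1 e2].
  destruct (Rmin_Rmax_le _ _ h2) as [e3 e4].
  repeat split; [apply ex_RInt_hseg | apply ex_RInt_hseg | apply ex_RInt_vseg | apply ex_RInt_vseg];
    intros t Ht; rewrite ?e1, ?e2, ?e3, ?e4 in Ht; first [apply (Hh t Ht) | apply (Hv t Ht)].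
Qed.

Lemma rect_int_minus F G x1 x2 y1 y2 : x1 <= x2 -> y1 <= y2 ->
  Ccont_on_boundary F x1 x2 y1 y2 -> Ccont_on_boundary G x1 x2 y1 y2 ->
  rect_int (fun z => F z - G z)%C x1 x2 y1 y2 = (rect_int F x1 x2 y1 y2 - rect_int G x1 x2 y1 y2)%C.
Proof.
  intros h1 h2 HF HG.
  destruct (ex_RInt_boundary F _ _ _ _ h1 h2 HF) as [a1 [a2 [a3 a4]]].
  destruct (ex_RInt_boundary G _ _ _ _ h1 h2 HG) as [b1 [b2 [b3 b4]]].
  unfold rect_int, hseg_int, vseg_int. rewrite !RInt_C_minus by assumption. ring.
Qed.

Lemma rect_int_scal F c x1 x2 y1 y2 : x1 <= x2 -> y1 <= y2 ->
  Ccont_on_boundary F x1 x2 y1 y2 ->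
  rect_int (fun z => c * F z)%C x1 x2 y1 y2 = (c * rect_int F x1 x2 y1 y2)%C.
Proof.
  intros h1 h2 HF.
  destruct (ex_RInt_boundary F _ _ _ _ h1 h2 HF) as [a1 [a2 [a3 a4]]].
  unfold rect_int, hseg_int, vseg_int. rewrite !RInt_C_scal by assumption. ring.
Qed.

Lemma rect_int_ext F G x1 x2 y1 y2 : x1 <= x2 -> y1 <= y2 ->
  (forall t, x1 <= t <= x2 -> F (t, y1) = G (t, y1) /\ F (t, y2) = G (t, y2)) ->
  (forall t, y1 <= t <= y2 -> F (x1, t) = G (x1, t) /\ F (x2, t) = G (x2, t)) ->
  rect_int F x1 x2 y1 y2 = rect_int G x1 x2 y1 y2.
Proof.
  intros h1 h2 Hh Hv.
  destruct (Rmin_Rmax_le _ _ h1) as [e1 e2]. destruct (Rmin_Rmax_le _ _ h2) as [e3 e4].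
  unfold rect_int, hseg_int, vseg_int.
  rewrite (RInt_ext (V := C_R_CompleteNormedModule) (fun t => F (t, y1)) (fun t => G (t, y1))),
    (RInt_ext (V := C_R_CompleteNormedModule) (fun t => F (t, y2)) (fun t => G (t, y2))),
    (RInt_ext (V := C_R_CompleteNormedModule) (fun t => F (x1, t)) (fun t => G (x1, t))),
    (RInt_ext (V := C_R_CompleteNormedModule) (fun t => F (x2, t)) (fun t => G (x2, t))); [reflexivity|..];
    intros t Ht; rewrite ?e1, ?e2, ?e3, ?e4 in Ht; first [apply Hh | apply Hv]; lra.
Qed.

Lemma Cmod_rect_int_le F x1 x2 y1 y2 B : x1 <= x2 -> y1 <= y2 ->
  Ccont_on_boundary F x1 x2 y1 y2 ->
  (forall t, x1 <= t <= x2 -> Cmod (F (t, y1)) <= B /\ Cmod (F (t, y2)) <= B) ->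
  (forall t, y1 <= t <= y2 -> Cmod (F (x1, t)) <= B /\ Cmod (F (x2, t)) <= B) ->
  Cmod (rect_int F x1 x2 y1 y2) <= 2 * ((x2 - x1) + (y2 - y1)) * B.
Proof.
  intros h1 h2 HF Hh Hv.
  destruct (ex_RInt_boundary F _ _ _ _ h1 h2 HF) as [a1 [a2 [a3 a4]]].
  assert (c1 : Cmod (hseg_int F y1 x1 x2) <= (x2 - x1) * B)
    by (apply Cmod_RInt_le_const; auto; intros; apply Hh; auto).
  assert (c2 : Cmod (hseg_int F y2 x1 x2) <= (x2 - x1) * B)
    by (apply Cmod_RInt_le_const; auto; intros; apply Hh; auto).
  assert (c3 : Cmod (vseg_int F x1 y1 y2) <= (y2 - y1) * B)
    by (apply Cmod_RInt_le_const; auto; intros; apply Hv; auto).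
  assert (c4 : Cmod (vseg_int F x2 y1 y2) <= (y2 - y1) * B)
    by (apply Cmod_RInt_le_const; auto; intros; apply Hv; auto).
  unfold rect_int.
  eapply Rle_trans; [apply Cmod_sub_le|]. rewrite Cmod_Ci_mult.
  eapply Rle_trans; [apply Rplus_le_compat_r, Cmod_sub_le|].
  eapply Rle_trans; [apply Rplus_le_compat_r, Rplus_le_compat_r, Cmod_triangle|].
  rewrite Cmod_Ci_mult. lra.
Qed.

Lemma rect_int_split_x F x1 x2 x3 y1 y2 : x1 <= x2 -> x2 <= x3 -> y1 <= y2 ->
  Ccont_on_rect F x1 x3 y1 y2 ->
  rect_int F x1 x3 y1 y2 = (rect_int F x1 x2 y1 y2 + rect_int F x2 x3 y1 y2)%C.
Proof.
  intros h1 h2 h3 H. unfold rect_int, hseg_int.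
  destruct (Rmin_Rmax_le _ _ h1) as [e1 e2]. destruct (Rmin_Rmax_le _ _ h2) as [e3 e4].
  rewrite (RInt_C_Chasles (fun t => F (t, y1)) x1 x2 x3), (RInt_C_Chasles (fun t => F (t, y2)) x1 x2 x3).
  - ring.
  all: apply ex_RInt_hseg; intros t Ht; rewrite ?e1, ?e2, ?e3, ?e4 in Ht; apply H; lra.
Qed.

Lemma rect_int_split_y F x1 x2 y1 y2 y3 : x1 <= x2 -> y1 <= y2 -> y2 <= y3 ->
  Ccont_on_rect F x1 x2 y1 y3 ->
  rect_int F x1 x2 y1 y3 = (rect_int F x1 x2 y1 y2 + rect_int F x1 x2 y2 y3)%C.
Proof.
  intros h1 h2 h3 H. unfold rect_int, vseg_int.
  destruct (Rmin_Rmax_le _ _ h2) as [e1 e2]. destruct (Rmin_Rmax_le _ _ h3) as [e3 e4].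
  rewrite (RInt_C_Chasles (fun t => F (x1, t)) y1 y2 y3), (RInt_C_Chasles (fun t => F (x2, t)) y1 y2 y3).
  - ring.
  all: apply ex_RInt_vseg; intros t Ht; rewrite ?e1, ?e2, ?e3, ?e4 in Ht; apply H; lra.
Qed.

Lemma rect_int_swap_x F x1 x2 y1 y2 :
  ex_CRInt (fun t => F (t, y1)) x1 x2 -> ex_CRInt (fun t => F (t, y2)) x1 x2 ->
  rect_int F x2 x1 y1 y2 = (- rect_int F x1 x2 y1 y2)%C.
Proof. intros H1 H2. unfold rect_int, hseg_int. rewrite !(RInt_C_swap _ x1 x2) by auto. ring. Qed.

Lemma rect_int_swap_y F x1 x2 y1 y2 :
  ex_CRInt (fun t => F (x1, t)) y1 y2 -> ex_CRInt (fun t => F (x2, t)) y1 y2 ->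
  rect_int F x1 x2 y2 y1 = (- rect_int F x1 x2 y1 y2)%C.
Proof. intros H1 H2. unfold rect_int, vseg_int. rewrite !(RInt_C_swap _ y1 y2) by auto. ring. Qed.

Lemma hseg_int_derive (P G : C -> C) y a b : a <= b ->
  (forall t, a <= t <= b -> is_C_derive P (t, y) (G (t, y))) ->
  (forall t, a <= t <= b -> Ccont G (t, y)) ->
  hseg_int G y a b = (P (b, y) - P (a, y))%C.
Proof.
  intros hab HP HG. destruct (Rmin_Rmax_le _ _ hab) as [e1 e2].
  assert (Ept : forall t, ((0, y) + RtoC t * (1, 0))%C = (t, y))
    by (intros t; unfold Cplus, Cmult, RtoC; simpl; f_equal; ring).
  apply (is_RInt_unique (V := C_R_CompleteNormedModule)).
  apply (is_RInt_derive (V := C_R_CompleteNormedModule) (fun t => P (t, y)) (fun t => G (t, y)));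
    intros t Ht; rewrite e1, e2 in Ht.
  - apply (is_derive_ext (fun t => P ((0, y) + RtoC t * (1, 0))%C)); [intros; rewrite Ept; reflexivity|].
    replace (G (t, y)) with (G (t, y) * (1, 0))%C by (destruct (G (t, y)); unfold Cmult; simpl; f_equal; ring).
    apply is_derive_line. rewrite Ept. auto.
  - apply (continuous_ext (T := R_UniformSpace) (U := C_R_CompleteNormedModule)
             (fun t => G ((0, y) + RtoC t * (1, 0))%C)); [intros; rewrite Ept; reflexivity|].
    apply continuous_line. rewrite Ept. auto.
Qed.

Lemma vseg_int_derive (P G : C -> C) x a b : a <= b ->
  (forall t, a <= t <= b -> is_C_derive P (x, t) (G (x, t))) ->
  (forall t, a <= t <= b -> Ccont G (x, t)) ->
  (Ci * vseg_int G x a b)%C = (P (x, b) - P (x, a))%C.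
Proof.
  intros hab HP HG. destruct (Rmin_Rmax_le _ _ hab) as [e1 e2].
  assert (Ept : forall t, ((x, 0) + RtoC t * (0, 1))%C = (x, t))
    by (intros t; unfold Cplus, Cmult, RtoC; simpl; f_equal; ring).
  unfold vseg_int. rewrite <- RInt_C_scal by (apply ex_RInt_vseg; rewrite e1, e2; auto).
  apply (is_RInt_unique (V := C_R_CompleteNormedModule)).
  apply (is_RInt_derive (V := C_R_CompleteNormedModule) (fun t => P (x, t)) (fun t => Ci * G (x, t))%C);
    intros t Ht; rewrite e1, e2 in Ht.
  - apply (is_derive_ext (fun t => P ((x, 0) + RtoC t * (0, 1))%C)); [intros; rewrite Ept; reflexivity|].
    replace (Ci * G (x, t))%C with (G (x, t) * (0, 1))%C
      by (destruct (G (x, t)); unfold Cmult, Ci; simpl; f_equal; ring).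
    apply is_derive_line. rewrite Ept. auto.
  - apply (continuous_ext (T := R_UniformSpace) (U := C_R_CompleteNormedModule)
             (fun t => Ci * G ((x, 0) + RtoC t * (0, 1)))%C); [intros; rewrite Ept; reflexivity|].
    apply (continuous_line (fun w => Ci * G w)%C). rewrite Ept. apply Ccont_scal. auto.
Qed.

Lemma rect_int_derive (P G : C -> C) x1 x2 y1 y2 : x1 <= x2 -> y1 <= y2 ->
  (forall x y, x1 <= x <= x2 -> y1 <= y <= y2 -> is_C_derive P (x, y) (G (x, y))) ->
  Ccont_on_rect G x1 x2 y1 y2 ->
  rect_int G x1 x2 y1 y2 = 0%C.
Proof.
  intros h1 h2 HP HG. unfold rect_int.
  rewrite (hseg_int_derive P G y1 x1 x2), (hseg_int_derive P G y2 x1 x2),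
    (vseg_int_derive P G x1 y1 y2), (vseg_int_derive P G x2 y1 y2);
    try assumption; try (intros; apply HP; lra); try (intros; apply HG; lra).
  ring.
Qed.

Lemma rect_int_affine (a b : C) x1 x2 y1 y2 : x1 <= x2 -> y1 <= y2 ->
  rect_int (fun w => a + b * w)%C x1 x2 y1 y2 = 0%C.
Proof.
  intros h1 h2.
  apply (rect_int_derive (fun w => a * w + b * / RtoC 2 * (w * w))%C); auto.
  - intros x y _ _. set (z := (x, y)).
    pose proof (is_C_derive_plus _ _ z _ _
      (is_C_derive_mult _ _ z _ _ (is_C_derive_const a z) (is_C_derive_id z))
      (is_C_derive_mult _ _ z _ _ (is_C_derive_const (b * / RtoC 2)%C z)
         (is_C_derive_mult _ _ z _ _ (is_C_derive_id z) (is_C_derive_id z)))) as H.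
    cbv beta in H. replace (a + b * z)%C with
      (RtoC 0 * z + a * RtoC 1 + (RtoC 0 * (z * z) + b * / RtoC 2 * (RtoC 1 * z + z * RtoC 1)))%C; [exact H|].
    field.
  - intros x y _ _. eapply is_C_derive_Ccont, is_C_derive_affine.
Qed.

(** * Goursat's theorem *)

Record rect := mkrect { rx1 : R; rx2 : R; ry1 : R; ry2 : R }.

Definition rect_int_of F r := rect_int F (rx1 r) (rx2 r) (ry1 r) (ry2 r).
Definition rect_wf r := rx1 r <= rx2 r /\ ry1 r <= ry2 r.
Definition rect_le q r := rx1 r <= rx1 q /\ rx2 q <= rx2 r /\ ry1 r <= ry1 q /\ ry2 q <= ry2 r.
Definition Ccont_on F r := Ccont_on_rect F (rx1 r) (rx2 r) (ry1 r) (ry2 r).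

Definition quarter (k : nat) (r : rect) : rect :=
  let mx := (rx1 r + rx2 r) / 2 in let my := (ry1 r + ry2 r) / 2 in
  match k with
  | O => mkrect (rx1 r) mx (ry1 r) my
  | 1%nat => mkrect mx (rx2 r) (ry1 r) my
  | 2%nat => mkrect (rx1 r) mx my (ry2 r)
  | _ => mkrect mx (rx2 r) my (ry2 r)
  end.

Definition half_of q r := rect_le q r /\
  rx2 q - rx1 q = (rx2 r - rx1 r) / 2 /\ ry2 q - ry1 q = (ry2 r - ry1 r) / 2.

Definition big_quarter (F : C -> C) (r q : rect) : bool :=
  if Rle_dec (Cmod (rect_int_of F r) / 4) (Cmod (rect_int_of F q)) then true else false.

Definition worst_quarter (F : C -> C) (r : rect) : rect :=
  if big_quarter F r (quarter 0 r) then quarter 0 r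
  else if big_quarter F r (quarter 1 r) then quarter 1 r
  else if big_quarter F r (quarter 2 r) then quarter 2 r else quarter 3 r.

Fixpoint bisect (F : C -> C) (r0 : rect) (n : nat) : rect :=
  match n with O => r0 | S k => worst_quarter F (bisect F r0 k) end.

Lemma quarter_half k r : rect_wf r -> half_of (quarter k r) r.
Proof. intros [h1 h2]. destruct k as [|[|[|k]]]; unfold half_of, rect_le; simpl; repeat split; lra. Qed.

Lemma rect_int_quarters F r : rect_wf r -> Ccont_on F r ->
  rect_int_of F r = (rect_int_of F (quarter 0 r) + rect_int_of F (quarter 1 r)
                     + rect_int_of F (quarter 2 r) + rect_int_of F (quarter 3 r))%C.
Proof.
  intros [h1 h2] H. unfold rect_int_of, quarter, Ccont_on in *; simpl.
  set (mx := (rx1 r + rx2 r) / 2). set (my := (ry1 r + ry2 r) / 2).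
  assert (rx1 r <= mx <= rx2 r) by (unfold mx; lra).
  assert (ry1 r <= my <= ry2 r) by (unfold my; lra).
  rewrite (rect_int_split_x F _ mx), (rect_int_split_y F (rx1 r) mx _ my), (rect_int_split_y F mx (rx2 r) _ my);
    try lra; try (eapply Ccont_on_rect_sub; [| | | | apply H]; lra).
  ring.
Qed.

Lemma worst_quarter_spec F r : rect_wf r -> Ccont_on F r ->
  half_of (worst_quarter F r) r /\ Cmod (rect_int_of F r) / 4 <= Cmod (rect_int_of F (worst_quarter F r)).
Proof.
  intros hw hg. unfold worst_quarter, big_quarter.
  destruct (Rle_dec _ (Cmod (rect_int_of F (quarter 0 r)))) as [a|a]; [split; auto; apply quarter_half; auto|].
  destruct (Rle_dec _ (Cmod (rect_int_of F (quarter 1 r)))) as [b|b]; [split; auto; apply quarter_half; auto|].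
  destruct (Rle_dec _ (Cmod (rect_int_of F (quarter 2 r)))) as [c|c]; [split; auto; apply quarter_half; auto|].
  split; [apply quarter_half; auto|].
  apply Rnot_le_lt in a, b, c.
  assert (Cmod (rect_int_of F r) <= Cmod (rect_int_of F (quarter 0 r)) + Cmod (rect_int_of F (quarter 1 r))
            + Cmod (rect_int_of F (quarter 2 r)) + Cmod (rect_int_of F (quarter 3 r))).
  { rewrite (rect_int_quarters F r hw hg).
    eapply Rle_trans; [apply Cmod_triangle|]. apply Rplus_le_compat_r.
    eapply Rle_trans; [apply Cmod_triangle|]. apply Rplus_le_compat_r. apply Cmod_triangle. }
  lra.
Qed.

Lemma bisect_spec F r0 : rect_wf r0 -> Ccont_on F r0 -> forall n,
  rect_wf (bisect F r0 n) /\ rect_le (bisect F r0 n) r0 /\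
  rx2 (bisect F r0 n) - rx1 (bisect F r0 n) = (rx2 r0 - rx1 r0) / 2 ^ n /\
  ry2 (bisect F r0 n) - ry1 (bisect F r0 n) = (ry2 r0 - ry1 r0) / 2 ^ n /\
  Cmod (rect_int_of F r0) / 4 ^ n <= Cmod (rect_int_of F (bisect F r0 n)).
Proof.
  intros hw hg. induction n as [|n [w [s [ex [ey J]]]]].
  - simpl. unfold rect_le, rect_wf in *. repeat split; lra.
  - simpl. set (r := bisect F r0 n) in *.
    assert (hr : Ccont_on F r) by (unfold rect_le in s; eapply Ccont_on_rect_sub; [| | | | apply hg]; lra).
    destruct (worst_quarter_spec F r w hr) as [[[b1 [b2 [b3 b4]]] [b5 b6]] b7].
    pose proof (pow_lt 2 n ltac:(lra)). pose proof (pow_lt 4 n ltac:(lra)).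
    unfold rect_wf, rect_le in *. repeat split; try lra.
    + rewrite b5, ex. field. lra.
    + rewrite b6, ey. field. lra.
    + replace (Cmod (rect_int_of F r0) / (4 * 4 ^ n)) with (Cmod (rect_int_of F r0) / 4 ^ n / 4)
        by (field; lra). lra.
Qed.

Lemma bisect_decr F r0 : rect_wf r0 -> Ccont_on F r0 -> forall n k,
  rect_le (bisect F r0 (n + k)) (bisect F r0 n).
Proof.
  intros hw hg n k. induction k as [|k IH].
  - rewrite Nat.add_0_r. unfold rect_le. lra.
  - rewrite Nat.add_succ_r. simpl.
    destruct (bisect_spec F r0 hw hg (n + k)) as [w [s _]].
    assert (hr : Ccont_on F (bisect F r0 (n + k)))
      by (unfold rect_le in s; eapply Ccont_on_rect_sub; [| | | | apply hg]; lra).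
    destruct (worst_quarter_spec F _ w hr) as [[b _] _]. unfold rect_le in *. lra.
Qed.

Lemma bisect_common_point F r0 : rect_wf r0 -> Ccont_on F r0 ->
  exists xs ys, forall n, rx1 (bisect F r0 n) <= xs <= rx2 (bisect F r0 n) /\
                          ry1 (bisect F r0 n) <= ys <= ry2 (bisect F r0 n).
Proof.
  intros hw hg.
  assert (cross : forall n m, rx1 (bisect F r0 n) <= rx2 (bisect F r0 m) /\
                              ry1 (bisect F r0 n) <= ry2 (bisect F r0 m)).
  { intros n m. destruct (Nat.le_ge_cases n m) as [h|h];
      destruct (Nat.le_exists_sub _ _ h) as [k [-> _]]; rewrite Nat.add_comm;
      [pose proof (bisect_decr F r0 hw hg n k) | pose proof (bisect_decr F r0 hw hg m k)];
      match goal with |- context [bisect F r0 (?a + k)] =>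
        destruct (bisect_spec F r0 hw hg (a + k)) as [[w1 w2] _] end;
      unfold rect_le in *; lra. }
  destruct (completeness (fun v => exists n, v = rx1 (bisect F r0 n))) as [xs [xs1 xs2]].
  { exists (rx2 r0). intros v [n ->]. apply (cross n O). }
  { exists (rx1 r0). exists O. reflexivity. }
  destruct (completeness (fun v => exists n, v = ry1 (bisect F r0 n))) as [ys [ys1 ys2]].
  { exists (ry2 r0). intros v [n ->]. apply (cross n O). }
  { exists (ry1 r0). exists O. reflexivity. }
  exists xs, ys. intros n. repeat split.
  - apply xs1. exists n. reflexivity.
  - apply xs2. intros v [m ->]. apply cross.
  - apply ys1. exists n. reflexivity.
  - apply ys2. intros v [m ->]. apply cross.
Qed.

Lemma Cmod_le_eps_eq0 (u : C) (K e0 : R) : 0 < e0 ->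
  (forall eps, 0 < eps < e0 -> Cmod u <= K * eps) -> u = 0%C.
Proof.
  intros he H. apply Cmod_eq_0, Rle_antisym; [|apply Cmod_ge_0].
  apply Rle_plus_epsilon. intros eps Heps. pose proof (Rabs_pos K). pose proof (Rle_abs K).
  set (e := Rmin (e0 / 2) (eps / (Rabs K + 1))).
  assert (0 < e) by (apply Rmin_pos; [lra | apply Rdiv_lt_0_compat; lra]).
  assert (e <= e0 / 2) by apply Rmin_l.
  assert (e * (Rabs K + 1) <= eps).
  { pose proof (Rmin_r (e0 / 2) (eps / (Rabs K + 1))) as h. fold e in h.
    apply (Rmult_le_compat_r (Rabs K + 1)) in h; [|lra].
    unfold Rdiv in h. rewrite Rmult_assoc, Rinv_l, Rmult_1_r in h by lra. exact h. }
  specialize (H e ltac:(lra)). nra.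
Qed.

(* On a rectangle containing [p], [F] differs from its tangent affine map at [p] by
   [eps * diam]; the affine part integrates to 0 (rect_int_affine). *)
Lemma Cmod_rect_int_le_near F (p l : C) eps d x1 x2 y1 y2 : 0 <= eps ->
  x1 <= fst p <= x2 -> y1 <= snd p <= y2 -> (x2 - x1) + (y2 - y1) < d ->
  Ccont_on_rect F x1 x2 y1 y2 ->
  (forall w, Cmod (w - p) < d -> Cmod (F w - F p - l * (w - p)) <= eps * Cmod (w - p)) ->
  Cmod (rect_int F x1 x2 y1 y2) <= 2 * eps * ((x2 - x1) + (y2 - y1)) ^ 2.
Proof.
  intros he hx hy hd HF Happ.
  set (D := (x2 - x1) + (y2 - y1)). assert (hD : D < d) by exact hd.
  set (A := fun w => (F p - l * p + l * w)%C).
  assert (hA : Ccont_on_rect A x1 x2 y1 y2)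
    by (intros x y _ _; eapply is_C_derive_Ccont, is_C_derive_affine).
  assert (near : forall x y, x1 <= x <= x2 -> y1 <= y <= y2 -> Cmod ((x, y) - p) <= D).
  { intros x y h1 h2. destruct p as [a b]. simpl in hx, hy.
    eapply Rle_trans; [apply Cmod_sub_pair_le|].
    assert (Rabs (x - a) <= x2 - x1) by (apply Rabs_le; lra).
    assert (Rabs (y - b) <= y2 - y1) by (apply Rabs_le; lra). unfold D; lra. }
  assert (bound : forall x y, x1 <= x <= x2 -> y1 <= y <= y2 -> Cmod (F (x, y) - A (x, y)) <= eps * D).
  { intros x y h1 h2. pose proof (near x y h1 h2).
    replace (F (x, y) - A (x, y))%C with (F (x, y) - F p - l * ((x, y) - p))%C by (unfold A; ring).
    eapply Rle_trans; [apply Happ; lra|]. apply Rmult_le_compat_l; lra. }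
  assert (h1 : x1 <= x2) by lra. assert (h2 : y1 <= y2) by lra.
  replace (rect_int F x1 x2 y1 y2) with (rect_int (fun w => F w - A w)%C x1 x2 y1 y2).
  2: { rewrite rect_int_minus by (auto; apply Ccont_on_rect_boundary; auto).
       unfold A. rewrite rect_int_affine by auto. ring. }
  replace (2 * eps * D ^ 2) with (2 * D * (eps * D)) by ring.
  apply Cmod_rect_int_le; auto.
  - apply Ccont_on_boundary_minus; apply Ccont_on_rect_boundary; auto.
  - intros t Ht. split; apply bound; lra.
  - intros t Ht. split; apply bound; lra.
Qed.

Theorem goursat (F : C -> C) x1 x2 y1 y2 : x1 <= x2 -> y1 <= y2 ->
  (forall x y, x1 <= x <= x2 -> y1 <= y <= y2 -> ex_C_derive F (x, y)) ->
  rect_int F x1 x2 y1 y2 = 0%C.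
Proof.
  intros hx hy HD.
  set (r0 := mkrect x1 x2 y1 y2).
  assert (hw : rect_wf r0) by (unfold rect_wf; simpl; lra).
  assert (hg : Ccont_on F r0) by (intros x y h1 h2; apply ex_C_derive_Ccont, HD; auto).
  destruct (bisect_common_point F r0 hw hg) as [xs [ys Hp]].
  destruct (Hp O) as [hx0 hy0]. destruct (HD xs ys hx0 hy0) as [l hl].
  set (W := (x2 - x1) + (y2 - y1)).
  apply (Cmod_le_eps_eq0 _ (2 * W ^ 2) 1); [lra|]. intros eps Heps.
  destruct (is_C_derive_approx F _ l hl eps) as [d [Hd Happ]]; [lra|].
  destruct (Pow_x_infinity 2 ltac:(rewrite Rabs_right; lra) (W / d + 1)) as [n Hn].
  specialize (Hn n (le_n n)). rewrite Rabs_right in Hn by (apply Rle_ge, pow_le; lra).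
  pose proof (pow_lt 2 n ltac:(lra)). pose proof (pow_lt 4 n ltac:(lra)).
  destruct (bisect_spec F r0 hw hg n) as [_ [s [ex [ey HJ]]]].
  set (r := bisect F r0 n) in *. unfold rect_le in s. simpl in s, ex, ey, HJ.
  assert (small : (rx2 r - rx1 r) + (ry2 r - ry1 r) = W / 2 ^ n) by (rewrite ex, ey; unfold W; field; lra).
  assert (Wd : W / 2 ^ n < d).
  { apply (Rmult_lt_reg_r (2 ^ n / d)); [apply Rdiv_lt_0_compat; lra|].
    replace (W / 2 ^ n * (2 ^ n / d)) with (W / d) by (field; lra).
    replace (d * (2 ^ n / d)) with (2 ^ n) by (field; lra). lra. }
  assert (local : Cmod (rect_int_of F r) <= 2 * eps * (W / 2 ^ n) ^ 2).
  { rewrite <- small. unfold rect_int_of.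
    destruct (bisect_spec F r0 hw hg n) as [[w1 w2] _]. destruct (Hp n) as [hpx hpy]. fold r in w1, w2, hpx, hpy.
    apply (Cmod_rect_int_le_near F (xs, ys) l eps d); [lra | exact hpx | exact hpy | lra | | exact Happ].
    apply (Ccont_on_rect_sub F x1 x2 y1 y2); [lra .. | exact hg]. }
  replace (2 * eps * (W / 2 ^ n) ^ 2) with (2 * W ^ 2 * eps / 4 ^ n) in local.
  2: { replace (4 ^ n) with (2 ^ n * 2 ^ n) by (rewrite <- Rpow_mult_distr; f_equal; ring). field. lra. }
  apply (Rmult_le_compat_r (4 ^ n)) in HJ; [|lra]. apply (Rmult_le_compat_r (4 ^ n)) in local; [|lra].
  unfold Rdiv in HJ, local. rewrite Rmult_assoc, Rinv_l, Rmult_1_r in HJ, local by lra.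
  unfold rect_int_of in HJ at 1. simpl in HJ. lra.
Qed.

Lemma goursat_any_orientation F a1 a2 b1 b2 :
  (forall x y, Rmin a1 a2 <= x <= Rmax a1 a2 -> Rmin b1 b2 <= y <= Rmax b1 b2 -> ex_C_derive F (x, y)) ->
  rect_int F a1 a2 b1 b2 = 0%C.
Proof.
  intros HD.
  pose proof (Rmin_l a1 a2). pose proof (Rmin_r a1 a2). pose proof (Rmax_l a1 a2). pose proof (Rmax_r a1 a2).
  pose proof (Rmin_l b1 b2). pose proof (Rmin_r b1 b2). pose proof (Rmax_l b1 b2). pose proof (Rmax_r b1 b2).
  assert (Hc : forall x y, Rmin a1 a2 <= x <= Rmax a1 a2 -> Rmin b1 b2 <= y <= Rmax b1 b2 -> Ccont F (x, y))
    by (intros; apply ex_C_derive_Ccont, HD; auto).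
  assert (Ih : forall y, Rmin b1 b2 <= y <= Rmax b1 b2 -> ex_CRInt (fun t => F (t, y)) a1 a2)
    by (intros y hy; apply ex_RInt_hseg; intros t ht; apply Hc; auto).
  assert (Iv : forall x, Rmin a1 a2 <= x <= Rmax a1 a2 -> ex_CRInt (fun t => F (x, t)) b1 b2)
    by (intros x hx; apply ex_RInt_vseg; intros t ht; apply Hc; auto).
  assert (G : forall x1 x2 y1 y2, Rmin a1 a2 = x1 -> Rmax a1 a2 = x2 ->
             Rmin b1 b2 = y1 -> Rmax b1 b2 = y2 -> rect_int F x1 x2 y1 y2 = 0%C)
    by (intros x1 x2 y1 y2 e1 e2 e3 e4; apply goursat; try lra; intros x y hx hy; apply HD; lra).
  destruct (Rle_or_lt a1 a2) as [ha|ha]; destruct (Rle_or_lt b1 b2) as [hb|hb].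
  - apply G; [apply Rmin_left | apply Rmax_right | apply Rmin_left | apply Rmax_right]; lra.
  - rewrite rect_int_swap_y, G; [ring | apply Rmin_left | apply Rmax_right | apply Rmin_right | apply Rmax_left
      | apply (ex_RInt_swap (V := C_R_NormedModule)), Iv ..]; lra.
  - rewrite rect_int_swap_x, G; [ring | apply Rmin_right | apply Rmax_left | apply Rmin_left | apply Rmax_right
      | apply (ex_RInt_swap (V := C_R_NormedModule)), Ih ..]; lra.
  - rewrite rect_int_swap_x, rect_int_swap_y, G;
      [ring | apply Rmin_right | apply Rmax_left | apply Rmin_right | apply Rmax_left
      | apply (ex_RInt_swap (V := C_R_NormedModule)); first [apply Ih | apply Iv] ..]; lra.
Qed.

(** * Cauchy's integral formula on rectangles *)

Lemma rect_int_eq_inner G x1 x2 y1 y2 u1 u2 v1 v2 :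
  x1 <= u1 -> u1 <= u2 -> u2 <= x2 -> y1 <= v1 -> v1 <= v2 -> v2 <= y2 ->
  Ccont_on_rect G x1 x2 y1 y2 ->
  (forall x y, x1 <= x <= x2 -> y1 <= y <= y2 -> (x <= u1 \/ u2 <= x \/ y <= v1 \/ v2 <= y) ->
     ex_C_derive G (x, y)) ->
  rect_int G x1 x2 y1 y2 = rect_int G u1 u2 v1 v2.
Proof.
  intros h1 h2 h3 h4 h5 h6 Hc HD.
  rewrite (rect_int_split_x G x1 u1 x2), (rect_int_split_x G u1 u2 x2),
    (rect_int_split_y G u1 u2 y1 v1 y2), (rect_int_split_y G u1 u2 v1 v2 y2);
    try lra; try (eapply Ccont_on_rect_sub; [| | | | apply Hc]; lra).
  rewrite (goursat G x1 u1 y1 y2), (goursat G u2 x2 y1 y2), (goursat G u1 u2 y1 v1), (goursat G u1 u2 v2 y2);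
    try lra; try (intros x y hx hy; apply HD; lra).
  ring.
Qed.

(* Shrink the contour to a square of side [2 e] around [(a, b)], on which [G] stays bounded. *)
Lemma goursat_punctured (G : C -> C) x1 x2 y1 y2 a b : x1 < a < x2 -> y1 < b < y2 ->
  Ccont_on_rect G x1 x2 y1 y2 ->
  (forall x y, x1 <= x <= x2 -> y1 <= y <= y2 -> (x, y) <> (a, b) -> ex_C_derive G (x, y)) ->
  rect_int G x1 x2 y1 y2 = 0%C.
Proof.
  intros ha hb Hc HD.
  destruct (Hc a b ltac:(lra) ltac:(lra) 1 Rlt_0_1) as [d0 [Hd0 Hb0]].
  set (B := Cmod (G (a, b)) + 1).
  assert (HB : forall w, Cmod (w - (a, b)) < d0 -> Cmod (G w) <= B).
  { intros w Hw. specialize (Hb0 w Hw). pose proof (Cmod_le_add_sub (G w) (G (a, b))). unfold B; lra. }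
  set (m := Rmin (Rmin (a - x1) (x2 - a)) (Rmin (b - y1) (y2 - b))).
  assert (hm : 0 < m) by (unfold m; repeat apply Rmin_pos; lra).
  assert (m1 : m <= a - x1 /\ m <= x2 - a /\ m <= b - y1 /\ m <= y2 - b).
  { unfold m. pose proof (Rmin_l (Rmin (a - x1) (x2 - a)) (Rmin (b - y1) (y2 - b))).
    pose proof (Rmin_r (Rmin (a - x1) (x2 - a)) (Rmin (b - y1) (y2 - b))).
    pose proof (Rmin_l (a - x1) (x2 - a)). pose proof (Rmin_r (a - x1) (x2 - a)).
    pose proof (Rmin_l (b - y1) (y2 - b)). pose proof (Rmin_r (b - y1) (y2 - b)). lra. }
  apply (Cmod_le_eps_eq0 _ (8 * B) (Rmin m (d0 / 2))); [apply Rmin_pos; lra|].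
  intros e [he he']. pose proof (Rmin_l m (d0 / 2)). pose proof (Rmin_r m (d0 / 2)).
  rewrite (rect_int_eq_inner G x1 x2 y1 y2 (a - e) (a + e) (b - e) (b + e)); try lra; auto.
  2: { intros x y hx hy hout. apply HD; auto. intros E. injection E. lra. }
  replace (8 * B * e) with (2 * (((a + e) - (a - e)) + ((b + e) - (b - e))) * B) by ring.
  assert (Hsq : forall x y, a - e <= x <= a + e -> b - e <= y <= b + e -> Cmod (G (x, y)) <= B).
  { intros x y hx hy. apply HB. eapply Rle_lt_trans; [apply Cmod_sub_pair_le|].
    assert (Rabs (x - a) <= e) by (apply Rabs_le; lra).
    assert (Rabs (y - b) <= e) by (apply Rabs_le; lra). lra. }
  apply Cmod_rect_int_le; try lra.
  - apply Ccont_on_rect_boundary; try lra. eapply Ccont_on_rect_sub; [| | | | apply Hc]; lra.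
  - intros t Ht. split; apply Hsq; lra.
  - intros t Ht. split; apply Hsq; lra.
Qed.

Lemma is_derive_R_pair (f1 f2 : R -> R) t d1 d2 :
  is_derive f1 t d1 -> is_derive f2 t d2 ->
  is_derive (K := R_AbsRing) (V := C_R_NormedModule) (fun s => (f1 s, f2 s) : C) t (d1, d2).
Proof.
  intros H1 H2. apply is_derive_Reals in H1. apply is_derive_Reals in H2.
  apply is_derive_R_C_intro. intros eps Heps.
  destruct (H1 (eps / 2)) as [e1 k1]; [lra|]. destruct (H2 (eps / 2)) as [e2 k2]; [lra|].
  exists (Rmin e1 e2). split; [apply Rmin_pos; apply cond_pos|].
  intros s Hs. destruct (Req_dec s t) as [->|hst].
  { replace (f1 t, f2 t) with ((f1 t, f2 t) + RtoC (t - t) * (d1, d2))%C at 1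
      by (unfold Cplus, Cmult, RtoC; simpl; f_equal; ring).
    unfold Rminus. rewrite Rplus_opp_r, Rabs_R0, Rmult_0_r.
    match goal with |- Cmod ?e <= _ => replace e with (RtoC 0) by ring end. rewrite Cmod_0; lra. }
  pose proof (Rmin_l e1 e2). pose proof (Rmin_r e1 e2).
  specialize (k1 (s - t) ltac:(lra) ltac:(lra)). specialize (k2 (s - t) ltac:(lra) ltac:(lra)).
  replace (t + (s - t)) with s in k1, k2 by ring.
  eapply Rle_trans; [apply Cmod_pair_le|]. simpl.
  assert (Rabs (f1 s + - f1 t - ((s - t) * d1 - 0 * d2)) <= eps / 2 * Rabs (s - t)).
  { replace (f1 s + - f1 t - ((s - t) * d1 - 0 * d2)) with (((f1 s - f1 t) / (s - t) - d1) * (s - t))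
      by (field; lra).
    rewrite Rabs_mult. apply Rmult_le_compat_r; [apply Rabs_pos | lra]. }
  assert (Rabs (f2 s + - f2 t - ((s - t) * d2 + 0 * d1)) <= eps / 2 * Rabs (s - t)).
  { replace (f2 s + - f2 t - ((s - t) * d2 + 0 * d1)) with (((f2 s - f2 t) / (s - t) - d2) * (s - t))
      by (field; lra).
    rewrite Rabs_mult. apply Rmult_le_compat_r; [apply Rabs_pos | lra]. }
  unfold Rminus in *. lra.
Qed.

(* For [c <> 0], a primitive of [s |-> 1 / (s + i c)]: a branch of [log (s + i c)] up to a constant. *)
Definition log_branch (s c : R) : C := (ln (s ^ 2 + c ^ 2) / 2, - atan (s / c)).

Lemma RInt_inv_hline (u1 u2 off c : R) : c <> 0 ->
  CRInt (fun t => Cinv (t - off, c)) u1 u2 = Cminus (log_branch (u2 - off) c) (log_branch (u1 - off) c).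
Proof.
  intros hc. apply (is_RInt_unique (V := C_R_CompleteNormedModule)).
  apply (is_RInt_derive (V := C_R_CompleteNormedModule) (fun t => log_branch (t - off) c)).
  - intros t _. unfold log_branch.
    assert (hp : 0 < (t - off) ^ 2 + c ^ 2) by (pose proof (pow2_ge_0 (t - off)); nra).
    change (Cinv (t - off, c)) with (((t - off) / ((t - off) ^ 2 + c ^ 2), - c / ((t - off) ^ 2 + c ^ 2)) : C).
    apply is_derive_R_pair.
    + auto_derive; [lra | field; lra].
    + auto_derive; [auto | field; split; [lra | auto]].
  - intros t _.
    apply (continuous_ext (T := R_UniformSpace) (U := C_R_CompleteNormedModule)
      (fun t => (fun w => / (w - (off, Ropp c)))%C ((0, 0) + RtoC t * (1, 0))%C)).
    { intros s. f_equal. unfold Cminus, Cplus, Copp, Cmult, RtoC; simpl; f_equal; ring. }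
    apply (continuous_line (fun w => / (w - (off, Ropp c)))%C), Ccont_inv_shift.
    intros E. injection E. lra.
Qed.

Lemma hseg_int_inv_shift (y a b x1 x2 : R) : y - b <> 0 ->
  hseg_int (fun w => / (w - (a, b)))%C y x1 x2 =
  Cminus (log_branch (x2 - a) (y - b)) (log_branch (x1 - a) (y - b)).
Proof.
  intros h. rewrite <- RInt_inv_hline by auto.
  apply (RInt_ext (V := C_R_CompleteNormedModule)). intros; reflexivity.
Qed.

Lemma vseg_int_inv_shift (x a b y1 y2 : R) : x - a <> 0 ->
  (Ci * vseg_int (fun w => / (w - (a, b)))%C x y1 y2)%C =
  Cminus (log_branch (y2 - b) (- (x - a))) (log_branch (y1 - b) (- (x - a))).
Proof.
  intros h. unfold vseg_int.
  assert (HE : ex_CRInt (fun t => (/ ((x, t) - (a, b)))%C) y1 y2).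
  { apply (ex_RInt_vseg (fun w => / (w - (a, b)))%C). intros t _.
    apply Ccont_inv_shift. intros E. injection E. lra. }
  rewrite <- (RInt_C_scal _ _ _ Ci HE).
  rewrite <- (RInt_inv_hline y1 y2 b (- (x - a))) by lra.
  apply (RInt_ext (V := C_R_CompleteNormedModule)). intros t _.
  assert (0 < (x - a) ^ 2 + (t - b) ^ 2) by (pose proof (pow2_ge_0 (t - b)); nra).
  unfold Cinv, Cmult, Cminus, Cplus, Copp, Ci; simpl. f_equal; field; lra.
Qed.

Lemma atan_add_atan_inv p q : 0 < p -> 0 < q -> atan (p / q) + atan (q / p) = PI / 2.
Proof.
  intros hp hq. replace (q / p) with (/ (p / q)) by (field; lra).
  rewrite atan_inv by (apply Rdiv_lt_0_compat; lra). ring.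
Qed.

Definition two_pi_i : C := (0, 2 * PI).

Lemma rect_int_inv_shift (x1 x2 y1 y2 a b : R) : x1 < a < x2 -> y1 < b < y2 ->
  rect_int (fun w => / (w - (a, b)))%C x1 x2 y1 y2 = two_pi_i.
Proof.
  intros ha hb. unfold rect_int.
  rewrite (hseg_int_inv_shift y1), (hseg_int_inv_shift y2),
    (vseg_int_inv_shift x1), (vseg_int_inv_shift x2) by lra.
  unfold log_branch, two_pi_i, Cminus, Cplus, Copp. cbn [fst snd]. f_equal.
  - replace ((y1 - b) ^ 2 + (- (x2 - a)) ^ 2) with ((x2 - a) ^ 2 + (y1 - b) ^ 2) by ring.
    replace ((y2 - b) ^ 2 + (- (x2 - a)) ^ 2) with ((x2 - a) ^ 2 + (y2 - b) ^ 2) by ring.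
    replace ((y1 - b) ^ 2 + (- (x1 - a)) ^ 2) with ((x1 - a) ^ 2 + (y1 - b) ^ 2) by ring.
    replace ((y2 - b) ^ 2 + (- (x1 - a)) ^ 2) with ((x1 - a) ^ 2 + (y2 - b) ^ 2) by ring.
    ring.
  - replace ((x2 - a) / (y1 - b)) with (- ((x2 - a) / (b - y1))) by (field; lra).
    replace ((x1 - a) / (y1 - b)) with ((a - x1) / (b - y1)) by (field; lra).
    replace ((y2 - b) / - (x2 - a)) with (- ((y2 - b) / (x2 - a))) by (field; lra).
    replace ((y1 - b) / - (x2 - a)) with ((b - y1) / (x2 - a)) by (field; lra).
    replace ((x1 - a) / (y2 - b)) with (- ((a - x1) / (y2 - b))) by (field; lra).
    replace ((y2 - b) / - (x1 - a)) with ((y2 - b) / (a - x1)) by (field; lra).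
    replace ((y1 - b) / - (x1 - a)) with (- ((b - y1) / (a - x1))) by (field; lra).
    rewrite !atan_opp.
    pose proof (atan_add_atan_inv (x2 - a) (b - y1) ltac:(lra) ltac:(lra)).
    pose proof (atan_add_atan_inv (a - x1) (b - y1) ltac:(lra) ltac:(lra)).
    pose proof (atan_add_atan_inv (x2 - a) (y2 - b) ltac:(lra) ltac:(lra)).
    pose proof (atan_add_atan_inv (a - x1) (y2 - b) ltac:(lra) ltac:(lra)).
    lra.
Qed.

Definition diff_quot (F : C -> C) (d z : C) (w : C) : C :=
  if Ceq_dec w z then d else ((F w - F z) * / (w - z))%C.

Lemma ex_C_derive_diff_quot (F : C -> C) d z w0 : w0 <> z -> ex_C_derive F w0 ->
  ex_C_derive (diff_quot F d z) w0.
Proof.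
  intros hne [l H]. eexists.
  apply (is_derive_ext_loc (K := C_AbsRing) (V := C_NormedModule) (fun w => (F w - F z) * / (w - z))%C).
  - apply (locally_norm_le_locally (K := C_AbsRing) (V := AbsRing_NormedModule C_AbsRing)).
    assert (hp : 0 < Cmod (w0 - z)) by (apply Cmod_gt_0; intros E; apply hne, Ceq_minus, E).
    exists (mkposreal _ hp). intros t Ht. unfold diff_quot.
    destruct (Ceq_dec t z) as [->|]; auto.
    change (Cmod (z - w0) < Cmod (w0 - z)) in Ht. rewrite Cmod_sub_sym in Ht. lra.
  - apply is_C_derive_mult; [apply is_C_derive_sub_const, H | apply is_C_derive_inv_shift, hne].
Qed.

Lemma Ccont_diff_quot (F : C -> C) d z : is_C_derive F z d -> Ccont (diff_quot F d z) z.
Proof.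
  intros H eps Heps. destruct (is_C_derive_approx F z d H (eps / 2)) as [dl [Hd Hw]]; [lra|].
  exists dl. split; auto. intros w Hw'. unfold diff_quot.
  destruct (Ceq_dec z z) as [_|]; [|congruence].
  destruct (Ceq_dec w z) as [->|hne].
  - replace (d - d)%C with (RtoC 0) by ring. rewrite Cmod_0. lra.
  - assert (hu : (w - z)%C <> 0%C) by (intros E; apply hne, Ceq_minus, E).
    assert (hp : 0 < Cmod (w - z)) by (apply Cmod_gt_0; auto).
    replace ((F w - F z) * / (w - z) - d)%C with ((F w - F z - d * (w - z)) * / (w - z))%C by (field; auto).
    rewrite Cmod_mult, Cmod_inv by auto.
    specialize (Hw w Hw').
    apply Rle_lt_trans with (eps / 2); [|lra].
    apply Rmult_le_reg_r with (Cmod (w - z)); auto.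
    rewrite Rmult_assoc, Rinv_l by lra. lra.
Qed.

(* Write [F w / (w - z)] as the holomorphic-off-[z] difference quotient plus [F z / (w - z)]. *)
Theorem cauchy_formula_rect (F : C -> C) x1 x2 y1 y2 a b : x1 < a < x2 -> y1 < b < y2 ->
  (forall x y, x1 <= x <= x2 -> y1 <= y <= y2 -> ex_C_derive F (x, y)) ->
  rect_int (fun w => F w * / (w - (a, b)))%C x1 x2 y1 y2 = (F (a, b) * two_pi_i)%C.
Proof.
  intros ha hb HD.
  set (z := (a, b)).
  destruct (HD a b ltac:(lra) ltac:(lra)) as [d hd]. fold z in hd.
  set (q := diff_quot F d z).
  assert (Hq : Ccont_on_rect q x1 x2 y1 y2).
  { intros x y hx hy. destruct (Ceq_dec (x, y) z) as [E|E].
    - rewrite E. apply Ccont_diff_quot, hd.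
    - apply ex_C_derive_Ccont, ex_C_derive_diff_quot; auto. }
  assert (Hq0 : rect_int q x1 x2 y1 y2 = 0%C).
  { apply (goursat_punctured q x1 x2 y1 y2 a b); auto.
    intros x y hx hy hne. apply ex_C_derive_diff_quot; auto. }
  assert (Hk0 : Ccont_on_boundary (fun w => / (w - z))%C x1 x2 y1 y2)
    by (split; intros t Ht; split; apply Ccont_inv_shift; intros E; injection E; lra).
  assert (Hk : Ccont_on_boundary (fun w => (- F z) * / (w - z))%C x1 x2 y1 y2)
    by (destruct Hk0 as [h1 h2]; split; intros t Ht; split; apply Ccont_scal;
        first [apply (h1 t Ht) | apply (h2 t Ht)]).
  rewrite (rect_int_ext _ (fun w => q w - (- F z) * / (w - z))%C) by (try lra;
    intros t Ht; split; unfold q, diff_quot; (destruct (Ceq_dec _ z) as [E|E];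
      [unfold z in E; injection E; lra|]);
    field; intros E'; apply E, Ceq_minus, E').
  rewrite rect_int_minus, rect_int_scal, Hq0 by (try lra; auto; apply Ccont_on_rect_boundary; auto; lra).
  unfold z. rewrite rect_int_inv_shift by auto. ring.
Qed.

(** * Derivatives of holomorphic functions *)

Definition on_boundary x1 x2 y1 y2 (w : C) : Prop :=
  (x1 <= fst w <= x2 /\ (snd w = y1 \/ snd w = y2)) \/
  (y1 <= snd w <= y2 /\ (fst w = x1 \/ fst w = x2)).

Lemma Ccont_on_boundary_of F x1 x2 y1 y2 :
  (forall w, on_boundary x1 x2 y1 y2 w -> Ccont F w) -> Ccont_on_boundary F x1 x2 y1 y2.
Proof. intros H. split; intros t Ht; split; apply H; unfold on_boundary; simpl; auto. Qed.

Lemma Cmod_rect_int_le_on_boundary F x1 x2 y1 y2 B : x1 <= x2 -> y1 <= y2 ->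
  (forall w, on_boundary x1 x2 y1 y2 w -> Ccont F w) ->
  (forall w, on_boundary x1 x2 y1 y2 w -> Cmod (F w) <= B) ->
  Cmod (rect_int F x1 x2 y1 y2) <= 2 * ((x2 - x1) + (y2 - y1)) * B.
Proof.
  intros h1 h2 Hc HB. apply Cmod_rect_int_le; auto; [apply Ccont_on_boundary_of; auto| |];
    intros t Ht; split; apply HB; unfold on_boundary; simpl; auto.
Qed.

Lemma is_C_derive_rect_int_param (F : C -> C) (K : C -> C -> C) (K' : C -> C) x1 x2 y1 y2 w0 d B M :
  x1 <= x2 -> y1 <= y2 -> 0 < d ->
  (forall w, Cmod (w - w0) < d -> forall u, on_boundary x1 x2 y1 y2 u -> Ccont (fun v => F v * K v w)%C u) ->
  (forall u, on_boundary x1 x2 y1 y2 u -> Ccont (fun v => F v * K' v)%C u) ->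
  (forall u, on_boundary x1 x2 y1 y2 u -> Cmod (F u) <= B) ->
  (forall w, Cmod (w - w0) < d -> forall u, on_boundary x1 x2 y1 y2 u ->
     Cmod (K u w - K u w0 - (w - w0) * K' u) <= M * (Cmod (w - w0) * Cmod (w - w0))) ->
  is_C_derive (fun w => rect_int (fun u => F u * K u w)%C x1 x2 y1 y2) w0
              (rect_int (fun u => F u * K' u)%C x1 x2 y1 y2).
Proof.
  intros h1 h2 hd HK HK' HB HM.
  assert (B0 : 0 <= B).
  { eapply Rle_trans; [apply Cmod_ge_0 | apply (HB (x1, y1))]. unfold on_boundary; simpl; left; split; [lra | auto]. }
  set (P := 2 * ((x2 - x1) + (y2 - y1))). assert (P0 : 0 <= P) by (unfold P; lra).
  set (Mp := Rmax M 0). assert (Mp0 : 0 <= Mp) by apply Rmax_r.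
  assert (PBM : 0 <= P * B * Mp) by (apply Rmult_le_pos; [apply Rmult_le_pos|]; auto).
  apply is_C_derive_intro. intros eps Heps.
  exists (Rmin d (eps / (P * B * Mp + 1))). split; [apply Rmin_pos; auto; apply Rdiv_lt_0_compat; lra|].
  intros w Hw. pose proof (Rmin_l d (eps / (P * B * Mp + 1))). pose proof (Rmin_r d (eps / (P * B * Mp + 1))).
  assert (hw0 : Cmod (w0 - w0) < d) by (replace (w0 - w0)%C with (RtoC 0) by ring; rewrite Cmod_0; auto).
  rewrite <- rect_int_minus by (auto; apply Ccont_on_boundary_of; auto; intros; apply HK; auto; lra).
  rewrite (Cmult_comm (rect_int _ x1 x2 y1 y2) (w - w0)).
  rewrite <- rect_int_scal by (auto; apply Ccont_on_boundary_of; auto).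
  rewrite <- rect_int_minus; auto.
  2: { apply Ccont_on_boundary_of. intros u hu. apply Ccont_minus; apply HK; auto; lra. }
  2: { apply Ccont_on_boundary_of. intros u hu. apply Ccont_scal; auto. }
  eapply Rle_trans.
  { apply (Cmod_rect_int_le_on_boundary _ x1 x2 y1 y2 (B * (Mp * (Cmod (w - w0) * Cmod (w - w0))))); auto.
    - intros u hu. apply Ccont_minus; [apply Ccont_minus; apply HK; auto; lra | apply Ccont_scal; auto].
    - intros u hu.
      replace (F u * K u w - F u * K u w0 - (w - w0) * (F u * K' u))%C
        with (F u * (K u w - K u w0 - (w - w0) * K' u))%C by ring.
      rewrite Cmod_mult. apply Rmult_le_compat; [apply Cmod_ge_0 | apply Cmod_ge_0 | auto |].
      eapply Rle_trans; [apply HM; auto; lra|]. apply Rmult_le_compat_r; [|apply Rmax_l].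
      pose proof (Cmod_ge_0 (w - w0)); nra. }
  fold P. pose proof (Cmod_ge_0 (w - w0)).
  assert (Cmod (w - w0) * (P * B * Mp + 1) <= eps).
  { apply Rmult_le_reg_r with (/ (P * B * Mp + 1)); [apply Rinv_0_lt_compat; lra|].
    rewrite Rmult_assoc, Rinv_r, Rmult_1_r by lra. lra. }
  replace (P * (B * (Mp * (Cmod (w - w0) * Cmod (w - w0))))) with
    ((P * B * Mp * Cmod (w - w0)) * Cmod (w - w0)) by ring.
  apply Rmult_le_compat_r; auto. nra.
Qed.

Lemma inv_taylor1_bound (u h : C) d : 0 < d -> d <= Cmod u -> Cmod h < d / 2 ->
  Cmod (/ (u - h) - / u - h * (/ u * / u))%C <= 2 / (d * d * d) * (Cmod h * Cmod h).
Proof.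
  intros hd hu hh. pose proof (Cmod_sub_ge u h). pose proof (Cmod_ge_0 h).
  assert (n1 : u <> 0%C) by (apply Cmod_pos_neq0; lra).
  assert (n2 : (u - h)%C <> 0%C) by (apply Cmod_pos_neq0; lra).
  replace (/ (u - h) - / u - h * (/ u * / u))%C with (h * h * / ((u - h) * u * u))%C by (field; auto).
  rewrite Cmod_mult, Cmod_mult, Cmod_inv by (repeat apply Cmult_neq_0; auto).
  rewrite !Cmod_mult.
  assert (pos : 0 < Cmod (u - h) * Cmod u * Cmod u) by (repeat apply Rmult_lt_0_compat; lra).
  assert (d / 2 * d * d <= Cmod (u - h) * Cmod u * Cmod u).
  { apply Rmult_le_compat; try lra; [apply Rmult_le_pos; lra | apply Rmult_le_compat; lra]. }
  assert (/ (Cmod (u - h) * Cmod u * Cmod u) <= / (d / 2 * d * d))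
    by (apply Rinv_le_contravar; auto; repeat apply Rmult_lt_0_compat; lra).
  replace (2 / (d * d * d)) with (/ (d / 2 * d * d)) by (field; lra).
  rewrite (Rmult_comm (/ (d / 2 * d * d))). apply Rmult_le_compat_l; nra.
Qed.

Lemma inv_sq_taylor1_bound (u h : C) d : 0 < d -> d <= Cmod u -> Cmod h < d / 2 ->
  Cmod (/ (u - h) * / (u - h) - / u * / u - h * (/ u * / u * / u + / u * / u * / u))%C
    <= 16 / (d * d * d * d) * (Cmod h * Cmod h).
Proof.
  intros hd hu hh. pose proof (Cmod_sub_ge u h). pose proof (Cmod_ge_0 h).
  assert (n1 : u <> 0%C) by (apply Cmod_pos_neq0; lra).
  assert (n2 : (u - h)%C <> 0%C) by (apply Cmod_pos_neq0; lra).
  replace (/ (u - h) * / (u - h) - / u * / u - h * (/ u * / u * / u + / u * / u * / u))%C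
    with (h * h * (u + u + u - h - h) * / ((u - h) * (u - h) * (u * u * u)))%C by (field; auto).
  rewrite Cmod_mult, Cmod_mult, Cmod_inv by (repeat apply Cmult_neq_0; auto).
  rewrite !Cmod_mult.
  assert (t1 : Cmod (u + u + u - h - h) <= 4 * Cmod u).
  { pose proof (Cmod_sub_le (u + u + u - h) h). pose proof (Cmod_sub_le (u + u + u) h).
    pose proof (Cmod_triangle (u + u) u). pose proof (Cmod_triangle u u). lra. }
  pose proof (Cmod_ge_0 (u + u + u - h - h)).
  set (U := Cmod u) in *. set (V := Cmod (u - h)) in *. set (Hn := Cmod h) in *.
  assert (U0 : 0 < U) by lra.
  assert (pos : 0 < V * V * (U * U * U)) by (repeat apply Rmult_lt_0_compat; lra).
  assert (le1 : U / 2 * (U / 2) * (U * U * U) <= V * V * (U * U * U)).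
  { apply Rmult_le_compat_r; [repeat apply Rmult_le_pos; lra | apply Rmult_le_compat; lra]. }
  apply Rle_trans with (Hn * Hn * (4 * U) * / (U / 2 * (U / 2) * (U * U * U))).
  { apply Rmult_le_compat; [nra | left; apply Rinv_0_lt_compat; nra | apply Rmult_le_compat_l; nra |].
    apply Rinv_le_contravar; auto. repeat apply Rmult_lt_0_compat; lra. }
  replace (Hn * Hn * (4 * U) * / (U / 2 * (U / 2) * (U * U * U))) with (16 / (U * U * U * U) * (Hn * Hn))
    by (field; lra).
  apply Rmult_le_compat_r; [nra|].
  unfold Rdiv. apply Rmult_le_compat_l; [lra|]. apply Rinv_le_contravar; [repeat apply Rmult_lt_0_compat; lra|].
  assert (d * d <= U * U) by nra. nra.
Qed.

Definition square_int F (z : C) s := rect_int F (fst z - s) (fst z + s) (snd z - s) (snd z + s).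
Definition on_square (z : C) s w := on_boundary (fst z - s) (fst z + s) (snd z - s) (snd z + s) w.

Lemma Rabs_fst_le_Cmod (v : C) : Rabs (fst v) <= Cmod v.
Proof. eapply Rle_trans; [|apply Rmax_Cmod]. apply Rmax_l. Qed.

Lemma Rabs_snd_le_Cmod (v : C) : Rabs (snd v) <= Cmod v.
Proof. eapply Rle_trans; [|apply Rmax_Cmod]. apply Rmax_r. Qed.

Lemma on_square_far z s w : 0 < s -> on_square z s w -> s <= Cmod (w - z).
Proof.
  intros hs H. pose proof (Rabs_fst_le_Cmod (w - z)). pose proof (Rabs_snd_le_Cmod (w - z)).
  destruct z as [a b], w as [x y]. unfold on_square, on_boundary in H. simpl in *.
  destruct H as [[_ [-> | ->]] | [_ [-> | ->]]];
    [ replace (b - s + - b) with (- s) in * by ring | replace (b + s + - b) with s in * by ring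
    | replace (a - s + - a) with (- s) in * by ring | replace (a + s + - a) with s in * by ring ];
    rewrite ?Rabs_Ropp, Rabs_right in * by lra; lra.
Qed.

Lemma in_square_near z s x y : fst z - s <= x <= fst z + s -> snd z - s <= y <= snd z + s ->
  Cmod ((x, y) - z) <= 2 * s.
Proof.
  intros hx hy. destruct z as [a b]. simpl in *. eapply Rle_trans; [apply Cmod_sub_pair_le|].
  assert (Rabs (x - a) <= s) by (apply Rabs_le; lra).
  assert (Rabs (y - b) <= s) by (apply Rabs_le; lra). lra.
Qed.

Lemma on_square_in z s w : on_square z s w ->
  fst z - s <= fst w <= fst z + s /\ snd z - s <= snd w <= snd z + s.
Proof. unfold on_square, on_boundary. intros [[h [-> | ->]] | [h [-> | ->]]]; split; auto; lra. Qed.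

Lemma in_square_of_near z s w : Cmod (w - z) < s ->
  fst z - s < fst w < fst z + s /\ snd z - s < snd w < snd z + s.
Proof.
  intros h. pose proof (Rabs_fst_le_Cmod (w - z)). pose proof (Rabs_snd_le_Cmod (w - z)).
  destruct w as [x y], z as [a b]. simpl in *.
  assert (h1 : Rabs (x + - a) < s) by lra. assert (h2 : Rabs (y + - b) < s) by lra.
  apply Rabs_def2 in h1. apply Rabs_def2 in h2. lra.
Qed.

Lemma in_square_in_disk z s x y : Cmod z + 2 * s < 1 ->
  fst z - s <= x <= fst z + s -> snd z - s <= y <= snd z + s -> in_disk (x, y).
Proof.
  intros h hx hy. unfold in_disk. pose proof (in_square_near z s x y hx hy).
  pose proof (Cmod_le_add_sub (x, y) z). lra.
Qed.

Lemma on_square_in_disk z s w : Cmod z + 2 * s < 1 -> on_square z s w -> in_disk w.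
Proof. intros h H. destruct (on_square_in z s w H). destruct w. apply (in_square_in_disk z s); auto. Qed.

Lemma on_square_corner z s : 0 < s -> on_square z s (fst z - s, snd z - s).
Proof. intros hs. unfold on_square, on_boundary. simpl. left. split; [lra | auto]. Qed.

Lemma Cmod_two_pi_i : Cmod two_pi_i = 2 * PI.
Proof.
  unfold two_pi_i, Cmod. simpl. replace (0 * (0 * 1) + 2 * PI * (2 * PI * 1)) with ((2 * PI) ^ 2) by ring.
  apply sqrt_pow2. pose proof PI_RGT_0. lra.
Qed.

Lemma two_pi_i_neq0 : two_pi_i <> 0%C.
Proof. apply Cmod_pos_neq0. rewrite Cmod_two_pi_i. pose proof PI_RGT_0. lra. Qed.

Section HolomorphicOnDisk.

Variables F Fd : C -> C.
Hypothesis HF : forall w, in_disk w -> is_C_derive F w (Fd w).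

Lemma Ccont_on_square z s u : Cmod z + 2 * s < 1 -> on_square z s u -> Ccont F u.
Proof. intros hz hu. eapply is_C_derive_Ccont, HF, on_square_in_disk; eauto. Qed.

(* Differentiate the Cauchy formula [F w * 2 i pi = square_int (F u / (u - w))] in [w]. *)
Lemma cauchy_formula_deriv_square z s B : 0 < s -> Cmod z + 2 * s < 1 ->
  (forall u, on_square z s u -> Cmod (F u) <= B) ->
  forall w, Cmod (w - z) < s / 2 ->
  (Fd w * two_pi_i)%C = square_int (fun u => F u * (/ (u - w) * / (u - w)))%C z s.
Proof.
  intros hs hz HB w hw.
  assert (cauchy : forall w', Cmod (w' - z) < s / 2 ->
     square_int (fun u => F u * / (u - w'))%C z s = (F w' * two_pi_i)%C).
  { intros w' hw'. destruct (in_square_of_near z s w') as [i1 i2]; [lra|].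
    destruct w' as [a' b']. simpl in i1, i2. unfold square_int.
    apply (cauchy_formula_rect F _ _ _ _ a' b'); try lra.
    intros x y hx hy. eexists. apply HF, (in_square_in_disk z s); auto. }
  assert (deriv : is_C_derive (fun w' => square_int (fun u => F u * / (u - w'))%C z s) w
                    (square_int (fun u => F u * (/ (u - w) * / (u - w)))%C z s)).
  { apply (is_C_derive_rect_int_param F (fun u w' => / (u - w'))%C (fun u => / (u - w) * / (u - w))%C
             _ _ _ _ w (s / 4) B (2 / (s / 2 * (s / 2) * (s / 2)))); try lra; auto.
    - intros w' hw' u hu. apply Ccont_mult; [eapply Ccont_on_square; eauto|].
      apply Ccont_inv_shift. intros ->. pose proof (on_square_far z s w' hs hu).
      pose proof (Cmod_sub_triangle w' w z). lra.
    - intros u hu. apply Ccont_mult; [eapply Ccont_on_square; eauto|].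
      apply Ccont_mult; apply Ccont_inv_shift; intros ->; pose proof (on_square_far z s w hs hu); lra.
    - intros w' hw' u hu. pose proof (on_square_far z s u hs hu).
      pose proof (Cmod_sub_triangle u w z). pose proof (Cmod_sub_sym w z).
      replace (u - w')%C with ((u - w) - (w' - w))%C by ring.
      apply inv_taylor1_bound; lra. }
  apply is_C_derive_unique in deriv. rewrite <- deriv.
  symmetry. apply is_C_derive_unique.
  apply (is_derive_ext_loc (K := C_AbsRing) (V := C_NormedModule)
           (fun w' => F w' * two_pi_i)%C).
  - apply (locally_norm_le_locally (K := C_AbsRing) (V := AbsRing_NormedModule C_AbsRing)).
    assert (hp : 0 < s / 2 - Cmod (w - z)) by lra.
    exists (mkposreal _ hp). intros t Ht. symmetry. apply cauchy.
    change (Cmod (t - w) < s / 2 - Cmod (w - z)) in Ht.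
    pose proof (Cmod_sub_triangle t w z). lra.
  - apply is_C_derive_mult_r, HF. unfold in_disk. pose proof (Cmod_le_add_sub w z). lra.
Qed.

Lemma Cmod_derive_le_square z s B : 0 < s -> Cmod z + 2 * s < 1 ->
  (forall u, on_square z s u -> Cmod (F u) <= B) -> Cmod (Fd z) <= 8 * B / s.
Proof.
  intros hs hz HB.
  assert (B0 : 0 <= B) by (eapply Rle_trans; [apply Cmod_ge_0 | apply (HB _ (on_square_corner z s hs))]).
  assert (hzz : Cmod (z - z) < s / 2) by (replace (z - z)%C with (RtoC 0) by ring; rewrite Cmod_0; lra).
  pose proof (cauchy_formula_deriv_square z s B hs hz HB z hzz) as E.
  assert (bound : Cmod (square_int (fun u => F u * (/ (u - z) * / (u - z)))%C z s)
                  <= 2 * ((fst z + s - (fst z - s)) + (snd z + s - (snd z - s))) * (B * (/ s * / s))).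
  { apply (Cmod_rect_int_le_on_boundary _ (fst z - s) (fst z + s) (snd z - s) (snd z + s)); try lra.
    - intros u hu. apply Ccont_mult; [eapply Ccont_on_square; eauto|].
      apply Ccont_mult; apply Ccont_inv_shift; intros ->;
        pose proof (on_square_far z s z hs hu) as H;
        replace (z - z)%C with (RtoC 0) in H by ring; rewrite Cmod_0 in H; lra.
    - intros u hu. pose proof (on_square_far z s u hs hu).
      assert (hn : (u - z)%C <> 0%C) by (apply Cmod_pos_neq0; lra).
      rewrite !Cmod_mult, !Cmod_inv by auto.
      apply Rmult_le_compat; [apply Cmod_ge_0 | apply Rmult_le_pos; left; apply Rinv_0_lt_compat; lra | auto |].
      apply Rmult_le_compat; try (left; apply Rinv_0_lt_compat; lra); apply Rinv_le_contravar; lra. }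
  rewrite <- E, Cmod_mult, Cmod_two_pi_i in bound.
  replace (2 * ((fst z + s - (fst z - s)) + (snd z + s - (snd z - s))) * (B * (/ s * / s)))
    with (8 * B / s) in bound by (field; lra).
  pose proof (Cmod_ge_0 (Fd z)). pose proof PI2_1. nra.
Qed.

(* The derivative of [F] is represented near [z] by a contour integral, which can be
   differentiated once more in the parameter. *)
Theorem ex_C_derive_derivative :
  (forall r, r < 1 -> exists B, forall w, Cmod w <= r -> Cmod (F w) <= B) ->
  forall z, in_disk z -> ex_C_derive Fd z.
Proof.
  intros Hbnd z hz0. unfold in_disk in hz0.
  set (s := (1 - Cmod z) / 4).
  assert (hs : 0 < s) by (unfold s; lra).
  assert (hz : Cmod z + 2 * s < 1) by (unfold s; lra).
  destruct (Hbnd (Cmod z + 2 * s) hz) as [B HB0].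
  assert (HB : forall u, on_square z s u -> Cmod (F u) <= B).
  { intros u hu. apply HB0. destruct (on_square_in z s u hu) as [h1 h2]. destruct u as [x y].
    pose proof (in_square_near z s x y h1 h2). pose proof (Cmod_le_add_sub (x, y) z). lra. }
  set (K3 := fun u => (/ (u - z) * / (u - z) * / (u - z) + / (u - z) * / (u - z) * / (u - z))%C).
  assert (D : is_C_derive (fun w => square_int (fun u => F u * (/ (u - w) * / (u - w)))%C z s) z
                          (square_int (fun u => F u * K3 u)%C z s)).
  { apply (is_C_derive_rect_int_param F (fun u w => / (u - w) * / (u - w))%C K3 _ _ _ _ z (s / 2) B
             (16 / (s * s * s * s))); try lra; auto.
    - intros w hw u hu. pose proof (on_square_far z s u hs hu).
      assert (u <> w) by (intros ->; lra).
      apply Ccont_mult; [eapply Ccont_on_square; eauto|]. apply Ccont_mult; apply Ccont_inv_shift; auto.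
    - intros u hu. pose proof (on_square_far z s u hs hu) as H.
      assert (u <> z) by (intros ->; replace (z - z)%C with (RtoC 0) in H by ring; rewrite Cmod_0 in H; lra).
      pose proof (Ccont_inv_shift z u ltac:(auto)).
      apply Ccont_mult; [eapply Ccont_on_square; eauto|].
      unfold K3. apply Ccont_plus; repeat apply Ccont_mult; auto.
    - intros w hw u hu. pose proof (on_square_far z s u hs hu).
      replace (u - w)%C with ((u - z) - (w - z))%C by ring.
      apply inv_sq_taylor1_bound; lra. }
  eexists.
  apply (is_derive_ext_loc (K := C_AbsRing) (V := C_NormedModule)
    (fun w => square_int (fun u => F u * (/ (u - w) * / (u - w)))%C z s * / two_pi_i)%C).
  - apply (locally_norm_le_locally (K := C_AbsRing) (V := AbsRing_NormedModule C_AbsRing)).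
    assert (hp : 0 < s / 2) by lra.
    exists (mkposreal _ hp). intros t Ht. change (Cmod (t - z) < s / 2) in Ht.
    rewrite <- (cauchy_formula_deriv_square z s B hs hz HB t Ht).
    change (Fd t * two_pi_i * / two_pi_i = Fd t)%C. field. apply two_pi_i_neq0.
  - apply is_C_derive_mult_r, D.
Qed.

End HolomorphicOnDisk.

(** * A primitive on the disk, and holomorphy of [Sg] *)

Lemma Cmod_RInt_sub_const_le (f : R -> C) a b (c : C) eps : ex_CRInt f a b ->
  (forall t, Rmin a b <= t <= Rmax a b -> Cmod (f t - c) <= eps) ->
  Cmod (CRInt f a b - RtoC (b - a) * c) <= Rabs (b - a) * eps.
Proof.
  intros Hf H. rewrite <- RInt_C_const, <- RInt_C_minus by (auto; apply ex_RInt_const).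
  apply Cmod_RInt_le_const_abs; auto. apply (ex_RInt_minus (V := C_R_NormedModule)); auto. apply ex_RInt_const.
Qed.

Lemma Cmod_pair_mono t s x y : Rabs t <= Rabs x -> Rabs s <= Rabs y -> Cmod (t, s) <= Cmod (x, y).
Proof.
  intros ht hs. unfold Cmod; cbn [fst snd]. apply sqrt_le_1_alt.
  rewrite <- (pow2_abs t), <- (pow2_abs x), <- (pow2_abs s), <- (pow2_abs y).
  pose proof (Rabs_pos t). pose proof (Rabs_pos s). nra.
Qed.

Lemma Cmod_pair_shift t s x y : Cmod (t, s) <= Cmod (x, y) + Rabs (t - x) + Rabs (s - y).
Proof. pose proof (Cmod_le_add_sub (t, s) (x, y)). pose proof (Cmod_sub_pair_le t s x y). lra. Qed.

Lemma Rabs_sub_between a b t : Rmin a b <= t <= Rmax a b -> Rabs (t - a) <= Rabs (b - a).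
Proof.
  intros h. destruct (Rle_or_lt a b).
  - rewrite Rmin_left, Rmax_right in h by lra. rewrite !Rabs_right by lra. lra.
  - rewrite Rmin_right, Rmax_left in h by lra. rewrite !Rabs_left1 by lra. lra.
Qed.

Lemma Rabs_between0 b t : Rmin 0 b <= t <= Rmax 0 b -> Rabs t <= Rabs b.
Proof. intros h. pose proof (Rabs_sub_between 0 b t h). rewrite !Rminus_0_r in H. exact H. Qed.

Definition prim (h : C -> C) (z : C) : C :=
  (hseg_int h 0 0 (fst z) + Ci * vseg_int h (fst z) 0 (snd z))%C.

Section Primitive.

Variable h : C -> C.
Hypothesis Hh : forall w, in_disk w -> ex_C_derive h w.

Let Hc w (hw : in_disk w) : Ccont h w := ex_C_derive_Ccont h w (Hh w hw).

(* Goursat on the rectangle [[x, x'] x [0, y]] moves the path of [prim] to [(x', y')]. *)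
Lemma prim_increment x y x' y' : Cmod (x, y) < 1 ->
  Cmod ((x', y') - (x, y)) < (1 - Cmod (x, y)) / 2 ->
  (prim h (x', y') - prim h (x, y))%C = (hseg_int h y x x' + Ci * vseg_int h x' y y')%C.
Proof.
  intros hz he.
  pose proof (Rabs_fst_le_Cmod ((x', y') - (x, y))) as ex.
  pose proof (Rabs_snd_le_Cmod ((x', y') - (x, y))) as ey. simpl in ex, ey. fold (x' - x) (y' - y) in ex, ey.
  pose proof (Cmod_ge_0 ((x', y') - (x, y))).
  assert (strip : forall t s, Rmin x x' <= t <= Rmax x x' -> Rabs s <= Rabs y -> in_disk (t, s)).
  { intros t s ht hs. unfold in_disk. pose proof (Cmod_pair_mono t s t y (Rle_refl _) hs).
    pose proof (Cmod_pair_shift t y x y). pose proof (Rabs_sub_between x x' t ht).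
    replace (y - y) with 0 in * by ring. rewrite Rabs_R0 in *. lra. }
  assert (vert : forall t, Rmin y y' <= t <= Rmax y y' -> in_disk (x', t)).
  { intros t ht. unfold in_disk. pose proof (Cmod_pair_shift x' t x y).
    pose proof (Rabs_sub_between y y' t ht). lra. }
  assert (vert0 : forall t, Rmin 0 y <= t <= Rmax 0 y -> in_disk (x, t)).
  { intros t ht. unfold in_disk. pose proof (Cmod_pair_mono x t x y (Rle_refl _) (Rabs_between0 y t ht)).
    lra. }
  assert (hor0 : forall t, Rmin 0 x <= t <= Rmax 0 x -> in_disk (t, 0)).
  { intros t ht. unfold in_disk.
    pose proof (Cmod_pair_mono t 0 x y (Rabs_between0 x t ht) ltac:(rewrite Rabs_R0; apply Rabs_pos)).
    lra. }
  assert (E1 : hseg_int h 0 0 x' = (hseg_int h 0 0 x + hseg_int h 0 x x')%C).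
  { apply RInt_C_Chasles; apply ex_RInt_hseg; intros t ht; apply Hc;
      [apply hor0 | apply strip]; auto; rewrite Rabs_R0; apply Rabs_pos. }
  assert (E2 : vseg_int h x' 0 y' = (vseg_int h x' 0 y + vseg_int h x' y y')%C).
  { apply RInt_C_Chasles; apply ex_RInt_vseg; intros t ht; apply Hc; [|apply vert; auto].
    apply strip; [pose proof (Rmin_l x x'); pose proof (Rmax_r x x'); pose proof (Rmin_r x x'); lra|].
    apply Rabs_between0; auto. }
  assert (E3 : rect_int h x x' 0 y = 0%C).
  { apply goursat_any_orientation. intros a b ha hb. apply Hh, strip; auto. apply Rabs_between0; auto. }
  unfold prim, rect_int in *. simpl. rewrite E1, E2.
  transitivity (hseg_int h y x x' + Ci * vseg_int h x' y y'
                + (hseg_int h 0 x x' + Ci * vseg_int h x' 0 y - hseg_int h y x x' - Ci * vseg_int h x 0 y))%C.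
  - ring.
  - rewrite E3. ring.
Qed.

Lemma is_C_derive_prim z : in_disk z -> is_C_derive (prim h) z (h z).
Proof.
  intros hz. destruct z as [x y]. unfold in_disk in hz.
  apply is_C_derive_intro. intros eps Heps.
  destruct (Hc (x, y) hz (eps / 2)) as [d [hd Hd]]; [lra|].
  exists (Rmin (d / 2) ((1 - Cmod (x, y)) / 2)). split; [apply Rmin_pos; lra|].
  intros [x' y'] Hw.
  pose proof (Rmin_l (d / 2) ((1 - Cmod (x, y)) / 2)). pose proof (Rmin_r (d / 2) ((1 - Cmod (x, y)) / 2)).
  pose proof (Rabs_fst_le_Cmod ((x', y') - (x, y))) as ex.
  pose proof (Rabs_snd_le_Cmod ((x', y') - (x, y))) as ey. simpl in ex, ey. fold (x' - x) (y' - y) in ex, ey.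
  assert (hor : Cmod (hseg_int h y x x' - RtoC (x' - x) * h (x, y)) <= Rabs (x' - x) * (eps / 2)).
  { apply Cmod_RInt_sub_const_le.
    - apply ex_RInt_hseg. intros t ht. apply Hc. unfold in_disk.
      pose proof (Cmod_pair_shift t y x y). pose proof (Rabs_sub_between x x' t ht).
      replace (y - y) with 0 in * by ring. rewrite Rabs_R0 in *. lra.
    - intros t ht. left. apply Hd. pose proof (Cmod_sub_pair_le t y x y).
      pose proof (Rabs_sub_between x x' t ht). replace (y - y) with 0 in * by ring. rewrite Rabs_R0 in *. lra. }
  assert (ver : Cmod (vseg_int h x' y y' - RtoC (y' - y) * h (x, y)) <= Rabs (y' - y) * (eps / 2)).
  { apply Cmod_RInt_sub_const_le.
    - apply ex_RInt_vseg. intros t ht. apply Hc. unfold in_disk.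
      pose proof (Cmod_pair_shift x' t x y). pose proof (Rabs_sub_between y y' t ht). lra.
    - intros t ht. left. apply Hd. pose proof (Cmod_sub_pair_le x' t x y).
      pose proof (Rabs_sub_between y y' t ht). lra. }
  rewrite prim_increment by lra.
  replace (hseg_int h y x x' + Ci * vseg_int h x' y y' - h (x, y) * ((x', y') - (x, y)))%C with
    ((hseg_int h y x x' - RtoC (x' - x) * h (x, y)) + Ci * (vseg_int h x' y y' - RtoC (y' - y) * h (x, y)))%C
    by (destruct (h (x, y)); unfold Cminus, Cplus, Copp, Cmult, Ci, RtoC; simpl; f_equal; ring).
  eapply Rle_trans; [apply Cmod_triangle|]. rewrite Cmod_Ci_mult.
  pose proof (Rabs_pos (x' - x)). pose proof (Rabs_pos (y' - y)).
  pose proof (Cmod_sub_pair_le x' y' x y). pose proof (Cmod_ge_0 ((x', y') - (x, y))). nra.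
Qed.

End Primitive.

Lemma in_disk_scale (t : R) (z : C) : 0 <= t <= 1 -> in_disk z -> in_disk (RtoC t * z)%C.
Proof.
  intros ht hz. unfold in_disk in *. rewrite Cmod_mult, Cmod_R, Rabs_right by lra.
  pose proof (Cmod_ge_0 z). nra.
Qed.

Lemma Sg_eq_prim (g fp : C -> C) :
  (forall w, in_disk w -> ex_C_derive (fun u => fp u * g u)%C w) ->
  forall z, in_disk z -> Sg g fp z = (prim (fun u => fp u * g u)%C z - prim (fun u => fp u * g u)%C (RtoC 0))%C.
Proof.
  intros Hh z hz. set (h := (fun u => fp u * g u)%C) in *.
  unfold Sg. apply (is_RInt_unique (V := C_R_CompleteNormedModule)).
  replace (prim h z - prim h (RtoC 0))%C with
    (minus (G := C_R_CompleteNormedModule) (prim h (RtoC 0 + RtoC 1 * z)%C) (prim h (RtoC 0 + RtoC 0 * z)%C))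
    by (change (Cminus (prim h (RtoC 0 + RtoC 1 * z)%C) (prim h (RtoC 0 + RtoC 0 * z)%C)
                = (prim h z - prim h (RtoC 0))%C); f_equal; f_equal; ring).
  apply (is_RInt_derive (V := C_R_CompleteNormedModule) (fun t => prim h (RtoC 0 + RtoC t * z)%C));
    intros t ht; rewrite Rmin_left, Rmax_right in ht by lra;
    assert (hd : in_disk (RtoC 0 + RtoC t * z)%C) by (rewrite Cplus_0_l; apply in_disk_scale; auto).
  - change (fp (RtoC t * z)%C * g (RtoC t * z)%C * z)%C with (h (RtoC t * z)%C * z)%C.
    replace (RtoC t * z)%C with (RtoC 0 + RtoC t * z)%C by ring.
    apply is_derive_line, is_C_derive_prim; auto.
  - apply (continuous_ext (T := R_UniformSpace) (U := C_R_CompleteNormedModule)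
             (fun t => (fun w => h w * z)%C (RtoC 0 + RtoC t * z)%C));
      [intros s; simpl; rewrite Cplus_0_l; reflexivity|].
    apply (continuous_line (fun w => h w * z)%C).
    apply (Ccont_mult h (fun _ => z)); [apply ex_C_derive_Ccont, Hh, hd | apply Ccont_const].
Qed.

Lemma Sg_holomorphic (g fp : C -> C) :
  (forall w, in_disk w -> ex_C_derive (fun u => fp u * g u)%C w) -> holomorphic_on_disk (Sg g fp).
Proof.
  intros Hh z hz. exists (fp z * g z)%C.
  apply (is_derive_ext_loc (K := C_AbsRing) (V := C_NormedModule)
    (fun w => prim (fun u => fp u * g u)%C w - prim (fun u => fp u * g u)%C (RtoC 0))%C).
  - apply (locally_norm_le_locally (K := C_AbsRing) (V := AbsRing_NormedModule C_AbsRing)).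
    unfold in_disk in hz. assert (hp : 0 < 1 - Cmod z) by lra.
    exists (mkposreal _ hp). intros t Ht. change (Cmod (t - z) < 1 - Cmod z) in Ht.
    symmetry. apply Sg_eq_prim; auto. unfold in_disk. pose proof (Cmod_le_add_sub t z). lra.
  - apply is_C_derive_sub_const, (is_C_derive_prim (fun u => fp u * g u)%C); auto.
Qed.

(** * Radial integrals and weights *)

Lemma continuous_of_eps_delta (f : R -> R) x :
  (forall eps, 0 < eps -> exists d, 0 < d /\ forall y, Rabs (y - x) < d -> Rabs (f y - f x) < eps) ->
  continuous (T := R_UniformSpace) (U := R_UniformSpace) f x.
Proof.
  intros H. apply filterlim_locally. intros eps.
  destruct (H eps (cond_pos eps)) as [d [hd Hd]].
  exists (mkposreal d hd). intros y hy. exact (Hd y hy).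
Qed.

Lemma Rabs_Cmod_sub_le (a b : C) : Rabs (Cmod a - Cmod b) <= Cmod (a - b).
Proof.
  pose proof (Cmod_sub_ge a b). pose proof (Cmod_sub_ge b a). rewrite Cmod_sub_sym in H0.
  apply Rabs_le. lra.
Qed.

Definition clamp (r u : R) : R := Rmax 0 (Rmin u r).

Lemma clamp_lipschitz r a b : Rabs (clamp r a - clamp r b) <= Rabs (a - b).
Proof. unfold clamp, Rmax, Rmin. repeat destruct Rle_dec; split_Rabs; lra. Qed.

Lemma clamp_range r u : 0 <= r -> 0 <= clamp r u <= r.
Proof. intros h. unfold clamp, Rmax, Rmin. repeat destruct Rle_dec; lra. Qed.

Lemma clamp_id r u : 0 <= u <= r -> clamp r u = u.
Proof. intros h. unfold clamp, Rmax, Rmin. repeat destruct Rle_dec; lra. Qed.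

Lemma continuous_clamp r u : continuous (T := R_UniformSpace) (U := R_UniformSpace) (clamp r) u.
Proof.
  apply continuous_of_eps_delta. intros eps Heps. exists eps. split; auto. intros y hy.
  eapply Rle_lt_trans; [apply clamp_lipschitz | exact hy].
Qed.

Lemma continuous_weight_clamp (nu : R -> R) r u : weight nu -> 0 <= r < 1 ->
  continuous (T := R_UniformSpace) (U := R_UniformSpace) (fun x => nu (clamp r x)) u.
Proof.
  intros [_ [Hc _]] hr. pose proof (clamp_range r u ltac:(lra)).
  intros P HP. destruct (Hc (clamp r u) ltac:(lra) P HP) as [eps He].
  exists eps. intros y hy. apply He.
  - eapply Rle_lt_trans; [apply clamp_lipschitz | exact hy].
  - pose proof (clamp_range r y); lra.
Qed.

Lemma continuous_radial_clamp (g : C -> C) r t u : holomorphic_on_disk g -> 0 <= r < 1 ->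
  continuous (T := R_UniformSpace) (U := R_UniformSpace)
    (fun x => Cmod (g (clamp r x * cos t, clamp r x * sin t))) u.
Proof.
  intros Hg hr. apply continuous_of_eps_delta. intros eps Heps.
  pose proof (clamp_range r u ltac:(lra)) as hc.
  assert (hd : in_disk (clamp r u * cos t, clamp r u * sin t))
    by (unfold in_disk; rewrite Cmod_polar, Rabs_right; lra).
  destruct (ex_C_derive_Ccont _ _ (Hg _ hd) eps Heps) as [d [hd0 Hd]].
  exists d. split; auto. intros y hy.
  eapply Rle_lt_trans; [apply Rabs_Cmod_sub_le | apply Hd].
  replace (Cminus (clamp r y * cos t, clamp r y * sin t) (clamp r u * cos t, clamp r u * sin t))
    with (((clamp r y - clamp r u) * cos t, (clamp r y - clamp r u) * sin t) : C)
    by (unfold Cminus, Cplus, Copp; simpl; f_equal; ring).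
  rewrite Cmod_polar. eapply Rle_lt_trans; [apply clamp_lipschitz | exact hy].
Qed.

(* [nu] is only continuous within [[0, 1)]: precomposing with [clamp r] yields an integrand
   continuous on all of [R] that agrees with the original one on [[0, r]]. *)
Lemma ex_RInt_radial (nu : R -> R) (g : C -> C) t r :
  weight nu -> (forall u, 0 <= u < 1 -> 0 < nu u) -> holomorphic_on_disk g -> 0 <= r < 1 ->
  ex_RInt (fun u => Cmod (g (u * cos t, u * sin t)) / ((1 - u ^ 2) * nu u)) 0 r.
Proof.
  intros Hw Hpos Hg hr.
  apply (ex_RInt_ext (fun u => (fun v => Cmod (g (v * cos t, v * sin t)) / ((1 - v ^ 2) * nu v)) (clamp r u))).
  { intros x hx. rewrite Rmin_left, Rmax_right in hx by lra. simpl. rewrite clamp_id by lra. reflexivity. }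
  apply (ex_RInt_continuous (V := R_CompleteNormedModule)). intros x _.
  pose proof (clamp_range r x ltac:(lra)) as hc.
  apply (continuous_mult (K := R_AbsRing) (fun u => Cmod (g (clamp r u * cos t, clamp r u * sin t)))
           (fun u => / ((1 - clamp r u ^ 2) * nu (clamp r u)))); [apply continuous_radial_clamp; auto|].
  apply continuous_Rinv_comp.
  - apply (continuous_mult (K := R_AbsRing) (fun u => 1 - clamp r u ^ 2) (fun u => nu (clamp r u)));
      [|apply continuous_weight_clamp; auto].
    apply (continuous_comp (U := R_UniformSpace) (V := R_UniformSpace) (W := R_UniformSpace)
             (clamp r) (fun v => 1 - v ^ 2)); [apply continuous_clamp|].
    apply (ex_derive_continuous (K := R_AbsRing) (V := R_NormedModule)). auto_derive. auto.
  - assert (0 < nu (clamp r x)) by (apply Hpos; lra).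
    assert (0 < 1 - clamp r x ^ 2) by nra.
    apply Rgt_not_eq, Rmult_lt_0_compat; auto.
Qed.

Lemma polar_form (z : C) : exists th, 0 <= th < 2 * PI /\ z = (Cmod z * cos th, Cmod z * sin th).
Proof.
  pose proof PI_RGT_0 as hpi.
  destruct (Req_dec (Cmod z) 0) as [h0|h0].
  - exists 0. split; [lra|]. apply Cmod_eq_0 in h0. rewrite h0, Cmod_0. unfold RtoC. f_equal; ring.
  - destruct z as [x y]. set (r := Cmod (x, y)) in *.
    assert (hr : 0 < r) by (pose proof (Cmod_ge_0 (x, y)); unfold r in *; lra).
    assert (hsq : x ^ 2 + y ^ 2 = r ^ 2) by (unfold r, Cmod; cbn [fst snd]; rewrite pow2_sqrt; [ring | nra]).
    set (a := x / r). set (b := y / r).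
    assert (hab : a ^ 2 + b ^ 2 = 1) by (unfold a, b; field_simplify; [rewrite hsq; field|]; lra).
    assert (ha : -1 <= a <= 1) by (split; nra).
    assert (hb2 : sqrt (1 - a²) = Rabs b) by (unfold Rsqr; rewrite <- sqrt_Rsqr_abs; f_equal; unfold Rsqr; nra).
    assert (ex : x = r * a) by (unfold a; field; lra).
    assert (ey : y = r * b) by (unfold b; field; lra).
    destruct (Rle_or_lt 0 b) as [hb|hb].
    + exists (acos a). split; [pose proof (acos_bound a); lra|].
      rewrite cos_acos, sin_acos, hb2, Rabs_right by lra. rewrite ex, ey at 1. reflexivity.
    + exists (2 * PI - acos a).
      assert (ha' : -1 < a < 1) by (split; nra).
      pose proof (acos_bound_lt a ha'). split; [lra|].
      rewrite cos_minus, sin_minus, cos_2PI, sin_2PI, cos_acos, sin_acos, hb2, Rabs_left by lra.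
      rewrite ex, ey at 1. f_equal; ring.
Qed.

Lemma property_U_doubling (nu : R -> R) : property_U nu -> (forall r, 0 <= r < 1 -> 0 < nu r) ->
  exists D, 0 < D /\ forall r, 0 <= r < 1 -> nu r <= D * nu ((1 + r) / 2).
Proof.
  intros [alpha [ha [Cu [hCu HU]]]] Hpos.
  assert (P4 : 0 < Rpower 4 alpha) by apply exp_pos.
  exists (Cu * Rpower 4 alpha). split; [nra|]. intros r hr.
  set (rho := (1 + r) / 2).
  assert (nrho : 0 < nu rho) by (apply Hpos; unfold rho; lra).
  assert (P1 : 0 < Rpower (1 - r ^ 2) alpha) by apply exp_pos.
  assert (P2 : 0 < Rpower (1 - rho ^ 2) alpha) by apply exp_pos.
  assert (Q : Rpower (1 - r ^ 2) alpha <= Rpower 4 alpha * Rpower (1 - rho ^ 2) alpha).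
  { rewrite Rpower_mult_distr by (unfold rho; nra). apply Rle_Rpower_l; [lra|]. split; unfold rho; nra. }
  specialize (HU r rho ltac:(lra) ltac:(unfold rho; lra) ltac:(unfold rho; lra)). cbv beta in HU.
  unfold Rdiv in HU. apply (Rmult_le_compat_r (Rpower (1 - r ^ 2) alpha)) in HU; [|lra].
  rewrite Rmult_assoc, Rinv_l, Rmult_1_r in HU by lra.
  eapply Rle_trans; [exact HU|].
  replace (Cu * (nu rho * / Rpower (1 - rho ^ 2) alpha) * Rpower (1 - r ^ 2) alpha)
    with (Cu * nu rho * / Rpower (1 - rho ^ 2) alpha * Rpower (1 - r ^ 2) alpha) by ring.
  apply (Rmult_le_reg_r (Rpower (1 - rho ^ 2) alpha)); [lra|].
  replace (Cu * nu rho * / Rpower (1 - rho ^ 2) alpha * Rpower (1 - r ^ 2) alpha * Rpower (1 - rho ^ 2) alpha)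
    with (Cu * nu rho * Rpower (1 - r ^ 2) alpha) by (field; repeat split; lra).
  replace (Cu * Rpower 4 alpha * nu rho * Rpower (1 - rho ^ 2) alpha)
    with (Cu * nu rho * (Rpower 4 alpha * Rpower (1 - rho ^ 2) alpha)) by ring.
  apply Rmult_le_compat_l; [nra | exact Q].
Qed.

Section WeightedBound.

Variables (nu : R -> R) (f : C -> C) (M : R).
Hypothesis Hnu : weight nu.
Hypothesis Hpos : forall r, 0 <= r < 1 -> 0 < nu r.
Hypothesis Hb : forall z, in_disk z -> nu (Cmod z) * Cmod (f z) <= M.

Lemma weighted_bound_nonneg : 0 <= M.
Proof.
  assert (h0 : in_disk (RtoC 0)) by (unfold in_disk; rewrite Cmod_0; lra).
  specialize (Hb _ h0). rewrite Cmod_0 in Hb. pose proof (Hpos 0 ltac:(lra)).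
  pose proof (Cmod_ge_0 (f (RtoC 0))). nra.
Qed.

Lemma Cmod_le_weighted_bound r w : 0 <= r < 1 -> Cmod w <= r -> Cmod (f w) <= M / nu r.
Proof.
  intros hr hw. destruct Hnu as [_ [_ Hdec]].
  pose proof weighted_bound_nonneg. pose proof (Cmod_ge_0 w).
  specialize (Hb w ltac:(unfold in_disk; lra)).
  assert (h1 : 0 < nu (Cmod w)) by (apply Hpos; lra).
  assert (h2 : 0 < nu r) by (apply Hpos; lra).
  assert (h3 : nu r <= nu (Cmod w)) by (apply Hdec; lra).
  apply (Rmult_le_reg_l (nu r)); [lra|]. unfold Rdiv. rewrite <- Rmult_assoc, (Rmult_comm (nu r) M).
  rewrite Rmult_assoc, Rinv_r, Rmult_1_r by lra. pose proof (Cmod_ge_0 (f w)). nra.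
Qed.

Lemma ex_C_derive_weighted_derive fp : (forall z, in_disk z -> is_C_derive f z (fp z)) ->
  forall w, in_disk w -> ex_C_derive fp w.
Proof.
  intros Hf. apply (ex_C_derive_derivative f fp Hf). intros r hr. destruct (Rle_or_lt 0 r) as [h|h].
  - exists (M / nu r). intros w hw. apply Cmod_le_weighted_bound; auto.
  - exists 0. intros w hw. pose proof (Cmod_ge_0 w). lra.
Qed.

(* Cauchy's estimate on the square of half-side [(1 - |w|) / 4] around [w], which stays in
   the disk of radius [(1 + |w|) / 2]; the doubling property compares [nu] at both radii. *)
Lemma Cmod_derive_le_weighted fp D : 0 < D ->
  (forall r, 0 <= r < 1 -> nu r <= D * nu ((1 + r) / 2)) ->
  (forall z, in_disk z -> is_C_derive f z (fp z)) ->
  forall w, in_disk w -> Cmod (fp w) <= 64 * D * M / ((1 - Cmod w ^ 2) * nu (Cmod w)).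
Proof.
  intros hD HD Hf w hw. unfold in_disk in hw.
  set (r := Cmod w) in *. pose proof (Cmod_ge_0 w) as r0. fold r in r0.
  set (s := (1 - r) / 4). set (rho := (1 + r) / 2).
  pose proof weighted_bound_nonneg.
  assert (nrho : 0 < nu rho) by (apply Hpos; unfold rho; lra).
  assert (nr : 0 < nu r) by (apply Hpos; lra).
  assert (HB : forall u, on_square w s u -> Cmod (f u) <= M / nu rho).
  { intros u hu. apply Cmod_le_weighted_bound; [unfold rho; lra|].
    destruct (on_square_in w s u hu) as [h1 h2]. destruct u as [x y].
    pose proof (in_square_near w s x y h1 h2). pose proof (Cmod_le_add_sub (x, y) w).
    unfold rho, s, r in *. lra. }
  pose proof (Cmod_derive_le_square f fp Hf w s (M / nu rho) ltac:(unfold s; lra) ltac:(unfold s; fold r; lra) HB) as E.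
  specialize (HD r ltac:(lra)). fold rho in HD.
  eapply Rle_trans; [exact E|].
  assert (P : 0 < (1 - r ^ 2) * nu r) by (apply Rmult_lt_0_compat; nra).
  apply (Rmult_le_reg_r ((1 - r ^ 2) * nu r * nu rho)); [nra|].
  replace (8 * (M / nu rho) / s * ((1 - r ^ 2) * nu r * nu rho)) with (32 * (1 + r) * M * nu r)
    by (unfold s; field; split; apply Rgt_not_eq; lra).
  replace (64 * D * M / ((1 - r ^ 2) * nu r) * ((1 - r ^ 2) * nu r * nu rho)) with (64 * M * (D * nu rho))
    by (field; split; apply Rgt_not_eq; nra).
  assert (0 <= M * (D * nu rho - nu r)) by (apply Rmult_le_pos; lra).
  assert (0 <= M * nu r * (1 - r)) by (apply Rmult_le_pos; [apply Rmult_le_pos|]; lra).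
  nra.
Qed.

End WeightedBound.

Lemma Cmod_Sg_le_radial (nu : R -> R) (g fp : C -> C) (A : R) th r :
  weight nu -> (forall u, 0 <= u < 1 -> 0 < nu u) -> holomorphic_on_disk g -> 0 <= A ->
  (forall w, in_disk w -> Ccont (fun u => fp u * g u)%C w) ->
  (forall w, in_disk w -> Cmod (fp w) <= A / ((1 - Cmod w ^ 2) * nu (Cmod w))) ->
  0 <= r < 1 ->
  Cmod (Sg g fp (r * cos th, r * sin th))
    <= A * RInt (fun u => Cmod (g (u * cos th, u * sin th)) / ((1 - u ^ 2) * nu u)) 0 r.
Proof.
  intros Hnu Hpos Hg hA Hc Hfp hr.
  set (z := (r * cos th, r * sin th) : C).
  set (psi := fun u => Cmod (g (u * cos th, u * sin th)) / ((1 - u ^ 2) * nu u)).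
  assert (hz : Cmod z = r) by (unfold z; rewrite Cmod_polar, Rabs_right; lra).
  assert (hzd : in_disk z) by (unfold in_disk; lra).
  assert (Ipsi : is_RInt (fun t => scal A (scal r (psi (r * t + 0)))) 0 1 (scal A (RInt psi 0 r))).
  { apply (is_RInt_scal (V := R_NormedModule)).
    apply (is_RInt_comp_lin (V := R_NormedModule) psi r 0 0 1).
    replace (r * 0 + 0) with 0 by ring. replace (r * 1 + 0) with r by ring.
    apply (RInt_correct (V := R_CompleteNormedModule)). apply ex_RInt_radial; auto. }
  assert (Iint : ex_CRInt (fun t => fp (RtoC t * z)%C * g (RtoC t * z)%C * z)%C 0 1).
  { apply (ex_RInt_ext (V := C_R_NormedModule) (fun t => (fun u => fp u * g u * z)%C (RtoC 0 + RtoC t * z)%C)).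
    { intros x _. simpl. rewrite Cplus_0_l. reflexivity. }
    apply (ex_RInt_line (fun u => fp u * g u * z)%C (RtoC 0) z). intros t ht. rewrite Rmin_left, Rmax_right in ht by lra. rewrite Cplus_0_l.
    apply (Ccont_mult (fun u => fp u * g u)%C (fun _ => z)); [apply Hc, in_disk_scale; auto | apply Ccont_const]. }
  unfold Sg. fold z. rewrite <- norm_C_R.
  apply (norm_RInt_le (V := C_R_NormedModule) (fun t => fp (RtoC t * z)%C * g (RtoC t * z)%C * z)%C (fun t => scal A (scal r (psi (r * t + 0)))) 0 1 _ _);
    [lra | | apply (RInt_correct (V := C_R_CompleteNormedModule)), Iint | exact Ipsi].
  intros t ht. rewrite norm_C_R, !Cmod_mult, hz.
  set (v := r * t + 0).
  assert (hv : Cmod (RtoC t * z)%C = v) by (rewrite Cmod_mult, Cmod_R, Rabs_right, hz by lra; unfold v; ring).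
  assert (Etz : (RtoC t * z)%C = (v * cos th, v * sin th))
    by (unfold z, v, Cmult, RtoC; simpl; f_equal; ring).
  assert (hdt : in_disk (RtoC t * z)%C) by (apply in_disk_scale; auto; lra).
  assert (hv1 : 0 <= v < 1) by (unfold in_disk in hdt; rewrite hv in hdt; split; [unfold v; nra | auto]).
  pose proof (Hfp _ hdt) as FE. rewrite hv in FE.
  assert (nv : 0 < nu v) by (apply Hpos; auto).
  assert (dv : 0 < 1 - v ^ 2) by nra.
  change (Cmod (fp (RtoC t * z)%C) * Cmod (g (RtoC t * z)%C) * r <= A * (r * psi v)).
  rewrite Etz in *. unfold psi. pose proof (Cmod_ge_0 (g (v * cos th, v * sin th))).
  apply Rle_trans with (A / ((1 - v ^ 2) * nu v) * Cmod (g (v * cos th, v * sin th)) * r).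
  - apply Rmult_le_compat_r; [lra|]. apply Rmult_le_compat_r; auto.
  - right. field. split; apply Rgt_not_eq; lra.
Qed.

Theorem proposition1 (nu mu : R -> R) (g : C -> C) :
  weight nu -> (forall r, 0 <= r < 1 -> 0 < nu r) -> property_U nu ->
  weight mu ->
  holomorphic_on_disk g ->
  (exists K : R, forall t theta : R, 0 <= t < 1 -> 0 <= theta < 2 * PI ->
     mu t * RInt (fun r : R =>
                    Cmod (g (r * cos theta, r * sin theta))
                      / ((1 - r ^ 2) * nu r)) 0 t <= K) ->
  (* S_g : H^oo_nu -> H^oo_mu is bounded *)
  exists Cst : R, 0 <= Cst /\
    forall (f fp : C -> C) (M : R),
      (forall z, in_disk z -> is_derive (K := C_AbsRing) f z (fp z)) ->
      (forall z, in_disk z -> nu (Cmod z) * Cmod (f z) <= M) ->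
      holomorphic_on_disk (Sg g fp) /\
      (forall z, in_disk z -> mu (Cmod z) * Cmod (Sg g fp z) <= Cst * M).
Proof.
  intros Hnu Hpos HU [Hmu _] Hg [K HK].
  destruct (property_U_doubling nu HU Hpos) as [D [hD HD]].
  assert (hK : 0 <= K).
  { specialize (HK 0 0 ltac:(lra) ltac:(pose proof PI_RGT_0; lra)).
    rewrite RInt_point in HK. specialize (Hmu 0 ltac:(lra)). change (mu 0 * 0 <= K) in HK. lra. }
  exists (64 * D * K). split; [nra|]. intros f fp M Hf Hb.
  pose proof (weighted_bound_nonneg nu f M Hpos Hb) as M0.
  assert (Hh : forall w, in_disk w -> ex_C_derive (fun u => fp u * g u)%C w).
  { intros w hw. destruct (ex_C_derive_weighted_derive nu f M Hnu Hpos Hb fp Hf w hw) as [l1 h1].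
    destruct (Hg w hw) as [l2 h2]. eexists. apply is_C_derive_mult; eauto. }
  split; [apply Sg_holomorphic; auto|]. intros z hz.
  destruct (polar_form z) as [th [hth Ez]].
  assert (hr : 0 <= Cmod z < 1) by (split; [apply Cmod_ge_0 | exact hz]).
  replace (Sg g fp z) with (Sg g fp (Cmod z * cos th, Cmod z * sin th)) by (rewrite <- Ez; reflexivity).
  pose proof (Cmod_Sg_le_radial nu g fp (64 * D * M) th (Cmod z) Hnu Hpos Hg ltac:(nra)
    (fun w hw => ex_C_derive_Ccont _ w (Hh w hw))
    (Cmod_derive_le_weighted nu f M Hnu Hpos Hb fp D hD HD Hf) hr) as Hbound.
  specialize (HK (Cmod z) th hr hth).
  eapply Rle_trans; [apply Rmult_le_compat_l; [apply Hmu, hr | exact Hbound]|].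
  set (I := RInt _ 0 (Cmod z)) in *.
  replace (mu (Cmod z) * (64 * D * M * I)) with (64 * D * M * (mu (Cmod z) * I)) by ring.
  replace (64 * D * K * M) with (64 * D * M * K) by ring.
  apply Rmult_le_compat_l; [nra | exact HK].
Qed.
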